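(* Let $\lambda,\mu\in C^1([-1,1])$ be positive functions with $\lambda(w)=\mu(-w)$ for all $w\in[-1,1]$, and let $b,c\in C([-1,1])$. Let $E=\{(z,w)\in[-1,1]^2:\ |z|\le |w|\}$. Then the system $$\lambda(w)L^{11}_w(z,w)+\lambda(z)L^{11}_z(z,w)=-\lambda'(z)L^{11}(z,w)-c(z)L^{12}(z,w),$$ $$\lambda(w)L^{12}_w(z,w)-\mu(z)L^{12}_z(z,w)=-b(z)L^{11}(z,w)+\mu'(z)L^{12}(z,w),$$ $$L^{11}(-w,w)=0,\qquad L^{12}(w,w)=h_1(w):=\frac{b(w)}{\lambda(w)+\mu(w)},$$ together with the system $$\mu(w)L^{22}_w(z,w)+\mu(z)L^{22}_z(z,w)=b(z)L^{21}(z,w)-\mu'(z)L^{22}(z,w),$$ $$\mu(w)L^{21}_w(z,w)-\lambda(z)L^{21}_z(z,w)=\lambda'(z)L^{21}(z,w)+c(z)L^{22}(z,w),$$ $$L^{22}(-w,w)=0,\qquad L^{21}(w,w)=h_2(w):=-\frac{c(w)}{\lambda(w)+\mu(w)},$$ posed on $E$, has a unique solution $L^{11},L^{12},L^{21},L^{22}\in C(E)$ (understood as solutions of the equivalent integral equations obtained by integrating along characteristics).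
   Context: $E$ is the union of $E_1=\{(z,w):0\le w\le 1,\ -w\le z\le w\}$ and $E_2=\{(z,w):-1\le w\le 0,\ w\le z\le -w\}$. *)

From Stdlib Require Import Reals.
From Coquelicot Require Import Coquelicot.
Open Scope R_scope.

Definition inI (a b x : R) : Prop := a <= x <= b.

Definition cont_on (a b : R) (f : R -> R) : Prop :=
  forall x, inI a b x -> forall eps, 0 < eps -> exists delta, 0 < delta /\
    forall y, inI a b y -> Rabs (y - x) < delta -> Rabs (f y - f x) < eps.

Definition has_deriv_on (a b : R) (f df : R -> R) : Prop :=
  forall x, inI a b x -> forall eps, 0 < eps -> exists delta, 0 < delta /\
    forall y, inI a b y -> y <> x -> Rabs (y - x) < delta ->
      Rabs ((f y - f x) / (y - x) - df x) < eps.

Definition C1_on (a b : R) (f df : R -> R) : Prop :=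
  has_deriv_on a b f df /\ cont_on a b df.

Definition inE (z w : R) : Prop :=
  -1 <= z <= 1 /\ -1 <= w <= 1 /\ Rabs z <= Rabs w.

Definition cont_on_E (L : R -> R -> R) : Prop :=
  forall z w, inE z w -> forall eps, 0 < eps -> exists delta, 0 < delta /\
    forall z' w', inE z' w' -> Rabs (z' - z) < delta -> Rabs (w' - w) < delta ->
      Rabs (L z' w' - L z w) < eps.

(* A characteristic curve s |-> (zc s, wc s), s in [s0,s1], lying in E,
   of the vector field  (z,w) |-> (az z, aw w), i.e. of the operator
   aw(w) d/dw + az(z) d/dz. *)
Definition char_curve (az aw : R -> R) (s0 s1 : R) (zc wc : R -> R) : Prop :=
  s0 <= s1 /\
  has_deriv_on s0 s1 zc (fun s => az (zc s)) /\
  has_deriv_on s0 s1 wc (fun s => aw (wc s)) /\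
  (forall s, inI s0 s1 s -> inE (zc s) (wc s)).

(* Integral form of  aw(w) L_w + az(z) L_z = F(z,w)  on E: along every
   characteristic segment in E, the increment of L equals the integral of F. *)
Definition char_solution (az aw : R -> R) (L F : R -> R -> R) : Prop :=
  forall s0 s1 zc wc, char_curve az aw s0 s1 zc wc ->
    is_RInt (fun s => F (zc s) (wc s)) s0 s1 (L (zc s1) (wc s1) - L (zc s0) (wc s0)).

Definition is_solution (lam dlam mu dmu b c : R -> R)
    (L11 L12 L21 L22 : R -> R -> R) : Prop :=
  cont_on_E L11 /\ cont_on_E L12 /\ cont_on_E L21 /\ cont_on_E L22 /\
  (* lam(w) L11_w + lam(z) L11_z = -lam'(z) L11 - c(z) L12 *)
  char_solution lam lam L11 (fun z w => - dlam z * L11 z w - c z * L12 z w) /\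
  (* lam(w) L12_w - mu(z) L12_z = -b(z) L11 + mu'(z) L12 *)
  char_solution (fun z => - mu z) lam L12 (fun z w => - b z * L11 z w + dmu z * L12 z w) /\
  (* mu(w) L22_w + mu(z) L22_z = b(z) L21 - mu'(z) L22 *)
  char_solution mu mu L22 (fun z w => b z * L21 z w - dmu z * L22 z w) /\
  (* mu(w) L21_w - lam(z) L21_z = lam'(z) L21 + c(z) L22 *)
  char_solution (fun z => - lam z) mu L21 (fun z w => dlam z * L21 z w + c z * L22 z w) /\
  (forall w, inI (-1) 1 w -> L11 (- w) w = 0) /\
  (forall w, inI (-1) 1 w -> L12 w w = b w / (lam w + mu w)) /\
  (forall w, inI (-1) 1 w -> L22 (- w) w = 0) /\
  (forall w, inI (-1) 1 w -> L21 w w = - (c w / (lam w + mu w))).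

(* Integrating along characteristics, each half of E becomes a Goursat problem on the triangle
   T = {0 <= w <= 1, |z| <= w}: after reflecting z (and, on the lower half, w together with the time
   of the characteristics), the hypothesis lam(w) = mu(-w) turns all four equations into
   a(w) u_w + a(z) u_z = (linear terms in u) with a single speed a > 0 and data on z = -w.
   With Lam' = 1/a, the flow of a is Lam^-1 (Lam z + s), and every point of T is reached from the
   line z = -w along it.  A solution is therefore exactly a fixed point of the Volterra operator
   "boundary value + integral along the backward characteristic".  In the sup norm weighted by
   exp((2C+1)(Lam w - Lam 0)), C a Lipschitz constant of the lower-order terms, this operator is a
   contraction of ratio 1/2, which gives existence (Picard iteration) and uniqueness.  The
   solutions on the two halves agree at the origin and glue to continuous functions on E. *)

From Stdlib Require Import Reals Ranalysis5 Lra Lia Psatz ClassicalEpsilon.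
From Coquelicot Require Import Coquelicot.
Open Scope R_scope.

Definition cont2 (f : R -> R -> R) : Prop := forall z w, continuity_2d_pt f z w.

Lemma continuity_eps (f : R -> R) : continuity f ->
  forall x eps, 0 < eps -> exists d, 0 < d /\
    forall y, Rabs (y - x) < d -> Rabs (f y - f x) < eps.
Proof.
  intros H x eps He. destruct (H x eps He) as [d [Hd H']].
  exists d; split; [exact Hd|]. intros y Hy.
  destruct (Req_dec y x) as [->|Hne]; [rewrite Rminus_diag, Rabs_R0; exact He|].
  apply (H' y). split; [split; [exact I|congruence]|exact Hy].
Qed.

Lemma continuity_of_eps (f : R -> R) :
  (forall x eps, 0 < eps -> exists d, 0 < d /\
    forall y, Rabs (y - x) < d -> Rabs (f y - f x) < eps) -> continuity f.
Proof.
  intros H x eps He. destruct (H x eps He) as [d [Hd H']].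
  exists d; split; [exact Hd|]. intros y [_ Hy]. exact (H' y Hy).
Qed.

Lemma cont2_eps (f : R -> R -> R) : cont2 f ->
  forall z w eps, 0 < eps -> exists d, 0 < d /\ forall z' w',
    Rabs (z' - z) < d -> Rabs (w' - w) < d -> Rabs (f z' w' - f z w) < eps.
Proof.
  intros H z w eps He. destruct (H z w (mkposreal eps He)) as [d Hd].
  exists d; split; [apply cond_pos|exact Hd].
Qed.

Lemma cont2_of_eps (f : R -> R -> R) :
  (forall z w eps, 0 < eps -> exists d, 0 < d /\ forall z' w',
    Rabs (z' - z) < d -> Rabs (w' - w) < d -> Rabs (f z' w' - f z w) < eps) -> cont2 f.
Proof.
  intros H z w eps. destruct (H z w eps (cond_pos eps)) as [d [Hd H']].
  exists (mkposreal d Hd). exact H'.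
Qed.

Lemma ex_RInt_continuity (f : R -> R) (u v : R) : continuity f -> ex_RInt f u v.
Proof.
  intros H. apply (@ex_RInt_continuous R_CompleteNormedModule).
  intros x _. apply continuity_pt_filterlim, H.
Qed.

Lemma cont2_comp (F : R -> R -> R) (f h : R -> R) :
  cont2 F -> continuity f -> continuity h -> continuity (fun s => F (f s) (h s)).
Proof.
  intros HF Hf Hh. apply continuity_of_eps. intros x eps He.
  destruct (cont2_eps F HF (f x) (h x) eps He) as [d [Hd H]].
  destruct (continuity_eps f Hf x d Hd) as [d1 [Hd1 H1]].
  destruct (continuity_eps h Hh x d Hd) as [d2 [Hd2 H2]].
  exists (Rmin d1 d2); split; [apply Rmin_pos; assumption|].
  intros y Hy. pose proof (Rmin_l d1 d2). pose proof (Rmin_r d1 d2).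
  apply H; [apply H1|apply H2]; lra.
Qed.

Lemma cont2_opp_l (u : R -> R -> R) : cont2 u -> cont2 (fun z w => u (- z) w).
Proof.
  intros H z w eps. destruct (H (- z) w eps) as [d Hd]. exists d.
  intros z' w' Hz Hw. apply Hd; [|exact Hw].
  replace (- z' - - z) with (- (z' - z)) by ring. rewrite Rabs_Ropp. exact Hz.
Qed.

Lemma cont2_mult_l (f : R -> R) (u : R -> R -> R) :
  continuity f -> cont2 u -> cont2 (fun z w => f z * u z w).
Proof.
  intros Hf Hu z w. apply continuity_2d_pt_mult; [|apply Hu].
  apply (continuity_1d_2d_pt_comp f (fun z _ => z)); [apply Hf|apply continuity_2d_pt_id1].
Qed.

Definition clamp (lo hi x : R) : R := Rmax lo (Rmin hi x).

Lemma clamp_in lo hi x : lo <= hi -> lo <= clamp lo hi x <= hi.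
Proof. intros. unfold clamp, Rmax, Rmin. repeat destruct Rle_dec; lra. Qed.

Lemma clamp_id lo hi x : lo <= x <= hi -> clamp lo hi x = x.
Proof. intros. unfold clamp, Rmax, Rmin. repeat destruct Rle_dec; lra. Qed.

Lemma clamp_lip lo hi x y : Rabs (clamp lo hi x - clamp lo hi y) <= Rabs (x - y).
Proof. unfold clamp, Rmax, Rmin. repeat destruct Rle_dec; split_Rabs; lra. Qed.

Lemma clamp_sym_lip p p' z z' : 0 <= p -> 0 <= p' ->
  Rabs (clamp (- p) p z - clamp (- p') p' z') <= Rabs (z - z') + Rabs (p - p').
Proof. intros. unfold clamp, Rmax, Rmin. repeat destruct Rle_dec; split_Rabs; lra. Qed.

Lemma continuity_clamp a b f : a <= b -> cont_on a b f ->
  continuity (fun x => f (clamp a b x)).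
Proof.
  intros Hab H. apply continuity_of_eps. intros x eps He.
  destruct (H (clamp a b x) (clamp_in a b x Hab) eps He) as [d [Hd H']].
  exists d; split; [exact Hd|]. intros y Hy. apply H'.
  - apply clamp_in, Hab.
  - eapply Rle_lt_trans; [apply clamp_lip|exact Hy].
Qed.

Lemma cont2_bounded_box (f : R -> R -> R) (r : R) : 0 < r -> cont2 f ->
  exists B, 0 <= B /\ forall z w, -r <= z <= r -> -r <= w <= r -> Rabs (f z w) <= B.
Proof.
  intros Hr Hf.
  destruct (uniform_continuity_2d f (-r) r (-r) r (fun z w _ _ => Hf z w) (mkposreal 1 Rlt_0_1))
    as [d Hd]; simpl in Hd.
  destruct (archimed_cor1 (d / r)) as [N [HN HN0]].
  { apply Rdiv_lt_0_compat; [apply cond_pos|exact Hr]. }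
  assert (HNr : 0 < INR N) by (apply lt_0_INR; exact HN0).
  assert (Hstep : r / INR N < d).
  { replace (pos d) with (r * (d / r)) by (field; lra).
    apply Rmult_lt_compat_l; assumption. }
  exists (Rabs (f 0 0) + INR N). split; [pose proof (Rabs_pos (f 0 0)); lra|].
  intros z w Hz Hw.
  (* Chain from the origin to (z, w) in [N] steps of length < d. *)
  set (q k := INR k / INR N).
  assert (Hq : forall k, (k <= N)%nat -> 0 <= q k <= 1).
  { intros k Hk. apply le_INR in Hk. pose proof (pos_INR k). unfold q. split.
    - apply Rdiv_le_0_compat; lra.
    - apply (Rmult_le_reg_r (INR N)); [lra|]. field_simplify; lra. }
  assert (Hbox : forall k x, (k <= N)%nat -> -r <= x <= r -> -r <= q k * x <= r).
  { intros k x Hk Hx. pose proof (Hq k Hk). split_Rabs; nra. }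
  assert (Hinc : forall k x, -r <= x <= r -> Rabs (q (S k) * x - q k * x) < d).
  { intros k x Hx. unfold q. rewrite S_INR.
    replace ((INR k + 1) / INR N * x - INR k / INR N * x) with (x / INR N) by (field; lra).
    unfold Rdiv. rewrite Rabs_mult, Rabs_inv, (Rabs_right (INR N)) by lra.
    assert (Rabs x <= r) by (apply Rabs_le; lra).
    pose proof (Rinv_0_lt_compat _ HNr). unfold Rdiv in Hstep. nra. }
  assert (Hchain : forall k, (k <= N)%nat -> Rabs (f (q k * z) (q k * w) - f 0 0) <= INR k).
  { induction k as [|k IH]; intros Hk.
    - unfold q. simpl. unfold Rdiv. rewrite !Rmult_0_l, Rminus_diag, Rabs_R0. lra.
    - assert (Hstep1 : Rabs (f (q (S k) * z) (q (S k) * w) - f (q k * z) (q k * w)) < 1).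
      { apply Hd; try apply Hbox; try apply Hinc; auto; lia. }
      specialize (IH ltac:(lia)). rewrite S_INR. split_Rabs; lra. }
  specialize (Hchain N (Nat.le_refl N)).
  replace (q N) with 1 in Hchain by (unfold q; field; lra).
  rewrite !Rmult_1_l in Hchain. split_Rabs; lra.
Qed.

Lemma Rabs_RInt_le (f h : R -> R) (u v : R) : u <= v -> ex_RInt f u v -> ex_RInt h u v ->
  (forall x, u <= x <= v -> Rabs (f x) <= h x) -> Rabs (RInt f u v) <= RInt h u v.
Proof.
  intros Huv Hf Hh H.
  apply (norm_RInt_le f h u v); [exact Huv|exact H| |];
    apply (RInt_correct (V := R_CompleteNormedModule)); assumption.
Qed.

Lemma RInt_exp_le (K k c s : R) : 0 <= K -> 0 < k -> s <= 0 ->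
  ex_RInt (fun t => K * exp (k * (c + t))) s 0 /\
  RInt (fun t => K * exp (k * (c + t))) s 0 <= K * exp (k * c) / k.
Proof.
  intros HK Hk Hs.
  set (P t := K * exp (k * (c + t)) / k).
  assert (HI : is_RInt (fun t => K * exp (k * (c + t))) s 0 (P 0 - P s)).
  { apply (is_RInt_derive P).
    - intros x _. unfold P. auto_derive; [exact I|]. field. lra.
    - intros x _. apply continuity_pt_filterlim.
      apply continuity_pt_mult; [apply continuity_pt_const; intros ? ?; reflexivity|].
      apply (continuity_pt_comp (fun t => k * (c + t)) exp); [|apply derivable_continuous_pt, derivable_pt_exp].
      apply derivable_continuous_pt. reg. }
  split; [exists (P 0 - P s); exact HI|].
  rewrite (is_RInt_unique _ _ _ _ HI). unfold P. rewrite Rplus_0_r.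
  assert (0 <= K * exp (k * (c + s)) / k)
    by (apply Rdiv_le_0_compat; [apply Rmult_le_pos; [exact HK|left; apply exp_pos]|lra]).
  lra.
Qed.

Lemma pow2_small (A eps : R) : 0 < eps -> exists n, A / 2 ^ n < eps.
Proof.
  intros He. destruct (cv_pow_half A eps He) as [N HN].
  exists N. specialize (HN N (Nat.le_refl N)). unfold R_dist in HN.
  rewrite Rminus_0_r in HN. split_Rabs; lra.
Qed.

Lemma eq_0_of_pow2_bound (x c : R) : (forall n, Rabs x <= c / 2 ^ n) -> x = 0.
Proof.
  intros H. destruct (Req_dec x 0) as [E|E]; [exact E|].
  destruct (pow2_small c (Rabs x) (Rabs_pos_lt x E)) as [n Hn]. specialize (H n). lra.
Qed.

Lemma Lim_seq_geom_bound (f : nat -> R) (A : R) : 0 <= A ->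
  (forall n, Rabs (f (S n) - f n) <= A / 2 ^ n) ->
  forall n, Rabs (Lim_seq f - f n) <= 2 * A / 2 ^ n.
Proof.
  intros HA H.
  assert (Hp : forall n, 0 < 2 ^ n) by (intros; apply pow_lt; lra).
  assert (Hsum : forall n j, Rabs (f (n + j)%nat - f n) <= 2 * A / 2 ^ n * (1 - / 2 ^ j)).
  { intros n j. induction j as [|j IH].
    - rewrite Nat.add_0_r, Rminus_diag, Rabs_R0. simpl. rewrite Rinv_1. lra.
    - replace (n + S j)%nat with (S (n + j)) by lia.
      replace (f (S (n + j)) - f n) with ((f (S (n + j)) - f (n + j)%nat) + (f (n + j)%nat - f n)) by ring.
      eapply Rle_trans; [apply Rabs_triang|].
      eapply Rle_trans; [apply Rplus_le_compat; [apply H|apply IH]|].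
      right. rewrite pow_add. simpl. field. split; apply pow_nonzero; lra. }
  assert (Htail : forall n k, (n <= k)%nat -> Rabs (f k - f n) <= 2 * A / 2 ^ n).
  { intros n k Hk. replace k with (n + (k - n))%nat by lia.
    eapply Rle_trans; [apply Hsum|].
    pose proof (Rinv_0_lt_compat _ (Hp (k - n)%nat)).
    assert (0 <= 2 * A / 2 ^ n) by (apply Rdiv_le_0_compat; [lra|apply Hp]). nra. }
  assert (Hex : ex_finite_lim_seq f).
  { apply ex_lim_seq_cauchy_corr. intros eps.
    destruct (pow2_small (2 * A) (eps / 2) ltac:(destruct eps; simpl; lra)) as [N HN].
    exists N. intros n k Hn Hk. pose proof (Htail N n Hn). pose proof (Htail N k Hk).
    split_Rabs; lra. }
  destruct Hex as [l Hl]. rewrite (is_lim_seq_unique f l Hl). simpl.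
  intros n. apply Rnot_lt_le. intros Hlt.
  set (e := Rabs (l - f n) - 2 * A / 2 ^ n).
  apply is_lim_seq_spec in Hl. destruct (Hl (mkposreal e ltac:(unfold e; lra))) as [N HN]. simpl in HN.
  specialize (HN (max N n) (Nat.le_max_l _ _)). specialize (Htail n (max N n) (Nat.le_max_r _ _)).
  unfold e in HN. split_Rabs; lra.
Qed.

Lemma cont2_unif_limit (u : nat -> R -> R -> R) (U : R -> R -> R) (e : nat -> R) :
  (forall n, cont2 (u n)) -> (forall n z w, Rabs (U z w - u n z w) <= e n) ->
  (forall eps, 0 < eps -> exists n, e n < eps) -> cont2 U.
Proof.
  intros Hu HU He. apply cont2_of_eps. intros z w eps Heps.
  destruct (He (eps / 3) ltac:(lra)) as [n Hn].
  destruct (cont2_eps _ (Hu n) z w (eps / 3) ltac:(lra)) as [d [Hd H]].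
  exists d; split; [exact Hd|]. intros z' w' H1 H2.
  specialize (H z' w' H1 H2). pose proof (HU n z w). pose proof (HU n z' w').
  split_Rabs; lra.
Qed.

(** * Derivatives on intervals, reflections and time reversal *)

Lemma has_deriv_on_is_derive (s0 s1 : R) f df x : has_deriv_on s0 s1 f df -> s0 < x < s1 ->
  is_derive f x (df x).
Proof.
  intros H Hx. apply is_derive_Reals. intros eps He.
  destruct (H x ltac:(unfold inI; lra) eps He) as [d [Hd H']].
  assert (Hp : 0 < Rmin d (Rmin (x - s0) (s1 - x))) by (repeat apply Rmin_pos; lra).
  exists (mkposreal _ Hp). intros h Hh0 Hh. simpl in Hh.
  pose proof (Rmin_l d (Rmin (x - s0) (s1 - x))). pose proof (Rmin_r d (Rmin (x - s0) (s1 - x))).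
  pose proof (Rmin_l (x - s0) (s1 - x)). pose proof (Rmin_r (x - s0) (s1 - x)).
  specialize (H' (x + h)). replace (x + h - x) with h in H' by ring.
  apply H'; unfold inI; split_Rabs; lra.
Qed.

Lemma is_derive_has_deriv_on f df s0 s1 : (forall x, is_derive f x (df x)) -> has_deriv_on s0 s1 f df.
Proof.
  intros H x _ eps He. specialize (H x). apply is_derive_Reals in H.
  destruct (H eps He) as [d Hd]. exists d; split; [apply cond_pos|].
  intros y _ Hne Hy. specialize (Hd (y - x) ltac:(lra) Hy).
  replace (x + (y - x)) with y in Hd by ring. exact Hd.
Qed.

Lemma has_deriv_on_cont_on (s0 s1 : R) f df : has_deriv_on s0 s1 f df -> cont_on s0 s1 f.
Proof.
  intros H x Hx eps He.
  destruct (H x Hx 1 ltac:(lra)) as [d [Hd H']].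
  set (K := Rabs (df x) + 1).
  assert (HK : 0 < K) by (unfold K; pose proof (Rabs_pos (df x)); lra).
  exists (Rmin d (eps / K)); split; [apply Rmin_pos; [lra|apply Rdiv_lt_0_compat; lra]|].
  intros y Hy Hxy. destruct (Req_dec y x) as [->|Hne]; [rewrite Rminus_diag, Rabs_R0; lra|].
  pose proof (Rmin_l d (eps / K)). pose proof (Rmin_r d (eps / K)).
  specialize (H' y Hy Hne ltac:(lra)).
  assert (Hq : Rabs ((f y - f x) / (y - x)) <= K).
  { unfold K. pose proof (Rabs_triang_inv ((f y - f x) / (y - x)) (df x)). lra. }
  replace (f y - f x) with ((f y - f x) / (y - x) * (y - x)) by (field; lra).
  rewrite Rabs_mult.
  apply Rle_lt_trans with (K * Rabs (y - x)); [apply Rmult_le_compat_r; [apply Rabs_pos|exact Hq]|].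
  replace eps with (K * (eps / K)) by (field; lra).
  apply Rmult_lt_compat_l; lra.
Qed.

Lemma cont_on_const_of_derive_0 (h : R -> R) (s0 s1 : R) : s0 <= s1 -> cont_on s0 s1 h ->
  (forall x, s0 < x < s1 -> is_derive h x 0) -> forall s, inI s0 s1 s -> h s = h s0.
Proof.
  intros Hs Hc Hd s [Ha Hb].
  assert (Hcl := continuity_clamp s0 s1 h Hs Hc).
  destruct (MVT_gen (fun x => h (clamp s0 s1 x)) s0 s (fun _ => 0)) as [c [_ Hc']].
  - intros x Hx. rewrite Rmin_left, Rmax_right in Hx by lra.
    apply is_derive_ext_loc with h; [|apply Hd; lra].
    assert (Hp : 0 < Rmin (x - s0) (s1 - x)) by (apply Rmin_pos; lra).
    exists (mkposreal _ Hp). intros y Hy. unfold ball in Hy; simpl in Hy.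
    unfold AbsRing_ball, abs, minus, plus, opp in Hy; simpl in Hy.
    pose proof (Rmin_l (x - s0) (s1 - x)). pose proof (Rmin_r (x - s0) (s1 - x)).
    rewrite clamp_id; [reflexivity|split_Rabs; lra].
  - intros x _. apply Hcl.
  - rewrite !clamp_id in Hc' by lra. lra.
Qed.

Definition refl (b : bool) (x : R) : R := if b then - x else x.

Lemma refl_involutive b x : refl b (refl b x) = x.
Proof. destruct b; simpl; ring. Qed.

Lemma Rabs_refl_sub b x y : Rabs (refl b x - refl b y) = Rabs (x - y).
Proof. destruct b; simpl; [|reflexivity]. rewrite <- Rabs_Ropp. f_equal; ring. Qed.

Lemma has_deriv_on_ext s0 s1 f df df' : (forall s, inI s0 s1 s -> df s = df' s) ->
  has_deriv_on s0 s1 f df -> has_deriv_on s0 s1 f df'.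
Proof. intros E H x Hx eps He. rewrite <- E by exact Hx. apply H; assumption. Qed.

Lemma has_deriv_on_sub s0 s1 s0' s1' f df : s0 <= s0' -> s1' <= s1 ->
  has_deriv_on s0 s1 f df -> has_deriv_on s0' s1' f df.
Proof.
  intros H1 H2 H x Hx eps He. destruct (H x ltac:(unfold inI in *; lra) eps He) as [d [Hd H']].
  exists d; split; [exact Hd|]. intros y Hy. apply H'. unfold inI in *; lra.
Qed.

Lemma has_deriv_on_refl s0 s1 f df b : has_deriv_on s0 s1 f df ->
  has_deriv_on s0 s1 (fun t => refl b (f t)) (fun t => refl b (df t)).
Proof.
  intros H x Hx eps He. destruct (H x Hx eps He) as [d [Hd H']]. exists d; split; [exact Hd|].
  intros y Hy Hne Hyx. specialize (H' y Hy Hne Hyx). destruct b; simpl; [|exact H'].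
  replace ((- f y - - f x) / (y - x) - - df x) with (- ((f y - f x) / (y - x) - df x)) by (field; lra).
  rewrite Rabs_Ropp. exact H'.
Qed.

Lemma has_deriv_on_reverse s0 s1 f df : has_deriv_on s0 s1 f df ->
  has_deriv_on (- s1) (- s0) (fun t => f (- t)) (fun t => - df (- t)).
Proof.
  intros H x Hx eps He.
  destruct (H (- x) ltac:(unfold inI in *; lra) eps He) as [d [Hd H']].
  exists d; split; [exact Hd|]. intros y Hy Hne Hyx.
  specialize (H' (- y) ltac:(unfold inI in *; lra) ltac:(lra)
    ltac:(replace (- y - - x) with (- (y - x)) by ring; rewrite Rabs_Ropp; exact Hyx)).
  replace ((f (- y) - f (- x)) / (y - x) - - df (- x)) with
     (- ((f (- y) - f (- x)) / (- y - - x) - df (- x))) by (field; lra).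
  rewrite Rabs_Ropp. exact H'.
Qed.

Lemma char_refl s0 s1 f (A B : R -> R) b : (forall s, inI s0 s1 s -> -1 <= f s <= 1) ->
  (forall x, -1 <= x <= 1 -> A x = refl b (B (refl b x))) ->
  has_deriv_on s0 s1 f (fun s => A (f s)) ->
  has_deriv_on s0 s1 (fun t => refl b (f t)) (fun t => B (refl b (f t))).
Proof.
  intros Hf HAB H. eapply has_deriv_on_ext; [|exact (has_deriv_on_refl _ _ _ _ b H)].
  intros s Hs. cbv beta. rewrite HAB, refl_involutive by (apply Hf, Hs). reflexivity.
Qed.

Lemma char_refl_reverse s0 s1 f (A B : R -> R) b : (forall s, inI s0 s1 s -> -1 <= f s <= 1) ->
  (forall x, -1 <= x <= 1 -> A x = refl (negb b) (B (refl b x))) ->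
  has_deriv_on s0 s1 f (fun s => A (f s)) ->
  has_deriv_on (- s1) (- s0) (fun t => refl b (f (- t))) (fun t => B (refl b (f (- t)))).
Proof.
  intros Hf HAB H.
  eapply has_deriv_on_ext; [|exact (has_deriv_on_refl _ _ _ _ b (has_deriv_on_reverse _ _ _ _ H))].
  intros s Hs. cbv beta. rewrite HAB by (apply Hf; unfold inI in *; lra).
  destruct b; simpl; ring.
Qed.

Lemma is_RInt_reverse f t0 t1 l : is_RInt f (- t1) (- t0) l ->
  is_RInt (fun y => - f (- y)) t0 t1 (- l).
Proof.
  intros H. apply is_RInt_swap in H. apply (is_RInt_comp_opp (V := R_NormedModule)) in H. exact H.
Qed.

Definition rev_lo (h : bool) (s0 s1 : R) : R := if h then - s1 else s0.

Definition rev_hi (h : bool) (s0 s1 : R) : R := if h then - s0 else s1.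

Lemma rev_bounds h s0 s1 : s0 <= s1 -> rev_lo h s0 s1 <= rev_hi h s0 s1.
Proof. destruct h; simpl; lra. Qed.

Lemma rev_in h s0 s1 t : inI (rev_lo h s0 s1) (rev_hi h s0 s1) t -> inI s0 s1 (refl h t).
Proof. destruct h; unfold inI; simpl; lra. Qed.

Lemma refl_cond_sym (A B : R -> R) k bb :
  (forall x, -1 <= x <= 1 -> A x = refl k (B (refl bb x))) ->
  forall y, -1 <= y <= 1 -> B y = refl k (A (refl bb y)).
Proof.
  intros H y Hy. rewrite H by (destruct bb; simpl; lra). rewrite !refl_involutive. reflexivity.
Qed.

(* Reflecting space by [bb] and, when [h], reversing time turns solutions of [c' = A(c)] into
   solutions of [c' = B(c)]. *)
Lemma char_transform h bb s0 s1 f (A B : R -> R) : (forall s, inI s0 s1 s -> -1 <= f s <= 1) ->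
  (forall x, -1 <= x <= 1 -> A x = refl (xorb h bb) (B (refl bb x))) ->
  has_deriv_on s0 s1 f (fun s => A (f s)) ->
  has_deriv_on (rev_lo h s0 s1) (rev_hi h s0 s1) (fun t => refl bb (f (refl h t)))
    (fun t => B (refl bb (f (refl h t)))).
Proof. destruct h; simpl; [apply char_refl_reverse|apply char_refl]. Qed.

Lemma is_RInt_refl h f t0 t1 l : is_RInt f (rev_lo h t0 t1) (rev_hi h t0 t1) l ->
  is_RInt (fun y => refl h (f (refl h y))) t0 t1 (refl h l).
Proof. destruct h; simpl; [apply is_RInt_reverse|exact (fun H => H)]. Qed.

Lemma refl_rev_value h (F : R -> R) t0 t1 :
  refl h (F (refl h (rev_hi h t0 t1)) - F (refl h (rev_lo h t0 t1))) = F t1 - F t0.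
Proof. destruct h; simpl; rewrite ?Ropp_involutive; ring. Qed.

(** * The triangle T *)

Definition inT (z w : R) : Prop := 0 <= w <= 1 /\ - w <= z <= w.

(* A retraction of the plane onto T, used to extend functions continuous on T. *)
Definition proj_w (w : R) : R := clamp 0 1 w.

Definition proj_z (z w : R) : R := clamp (- proj_w w) (proj_w w) z.

Lemma proj_w_in w : 0 <= proj_w w <= 1.
Proof. apply clamp_in; lra. Qed.

Lemma proj_in z w : inT (proj_z z w) (proj_w w).
Proof. pose proof (proj_w_in w). split; [assumption|apply clamp_in; lra]. Qed.

Lemma proj_id z w : inT z w -> proj_z z w = z /\ proj_w w = w.
Proof.
  intros [H1 H2]. assert (E : proj_w w = w) by (apply clamp_id; exact H1).
  split; [|exact E]. unfold proj_z. rewrite E. apply clamp_id, H2.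
Qed.

Lemma proj_z_lip z w z' w' : Rabs (proj_z z w - proj_z z' w') <= Rabs (z - z') + Rabs (w - w').
Proof.
  unfold proj_z. pose proof (proj_w_in w). pose proof (proj_w_in w').
  eapply Rle_trans; [apply clamp_sym_lip; lra|]. pose proof (clamp_lip 0 1 w w'). unfold proj_w. lra.
Qed.

Definition cont_T (f : R -> R -> R) : Prop := forall z w, inT z w -> forall eps, 0 < eps ->
  exists d, 0 < d /\ forall z' w', inT z' w' -> Rabs (z' - z) < d -> Rabs (w' - w) < d ->
    Rabs (f z' w' - f z w) < eps.

Lemma cont2_proj f : cont_T f -> cont2 (fun z w => f (proj_z z w) (proj_w w)).
Proof.
  intros H. apply cont2_of_eps. intros z w eps He.
  destruct (H _ _ (proj_in z w) eps He) as [d [Hd H']].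
  exists (d / 2); split; [lra|]. intros z' w' H1 H2.
  apply H'; [apply proj_in| |].
  - pose proof (proj_z_lip z' w' z w). lra.
  - pose proof (clamp_lip 0 1 w' w). unfold proj_w. lra.
Qed.

Lemma cont2_cont_T f : cont2 f -> cont_T f.
Proof.
  intros H z w _ eps He. destruct (cont2_eps f H z w eps He) as [d [Hd H']].
  exists d; split; [exact Hd|]. intros z' w' _. apply H'.
Qed.

Lemma cont_T_bounded f : cont_T f -> exists B, 0 <= B /\ forall z w, inT z w -> Rabs (f z w) <= B.
Proof.
  intros H. destruct (cont2_bounded_box _ 1 Rlt_0_1 (cont2_proj f H)) as [B [HB HB']].
  exists B; split; [exact HB|]. intros z w HP.
  destruct (proj_id z w HP) as [E1 E2]. specialize (HB' z w). rewrite E1, E2 in HB'.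
  destruct HP. apply HB'; lra.
Qed.

Definition char_curve_T (a : R -> R) (s0 s1 : R) (zc wc : R -> R) : Prop :=
  s0 <= s1 /\
  has_deriv_on s0 s1 zc (fun s => a (zc s)) /\
  has_deriv_on s0 s1 wc (fun s => a (wc s)) /\
  (forall s, inI s0 s1 s -> inT (zc s) (wc s)).

Definition char_solution_T (a : R -> R) (L F : R -> R -> R) : Prop :=
  forall s0 s1 zc wc, char_curve_T a s0 s1 zc wc ->
    is_RInt (fun s => F (zc s) (wc s)) s0 s1 (L (zc s1) (wc s1) - L (zc s0) (wc s0)).

Lemma cont_T_plus f h : cont_T f -> cont_T h -> cont_T (fun z w => f z w + h z w).
Proof.
  intros Hf Hh z w HP eps He.
  destruct (Hf z w HP (eps / 2) ltac:(lra)) as [d1 [Hd1 H1]].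
  destruct (Hh z w HP (eps / 2) ltac:(lra)) as [d2 [Hd2 H2]].
  exists (Rmin d1 d2); split; [apply Rmin_pos; assumption|]. intros z' w' HQ Hz Hw.
  pose proof (Rmin_l d1 d2). pose proof (Rmin_r d1 d2).
  specialize (H1 z' w' HQ ltac:(lra) ltac:(lra)). specialize (H2 z' w' HQ ltac:(lra) ltac:(lra)).
  split_Rabs; lra.
Qed.

Lemma inE_bounds z w : inE z w -> -1 <= z <= 1 /\ -1 <= w <= 1.
Proof. intros [H1 [H2 _]]. split; assumption. Qed.

Lemma inE_0 z : inE z 0 -> z = 0.
Proof. intros [_ [_ H]]. rewrite Rabs_R0 in H. apply Rabs_eq_0. pose proof (Rabs_pos z). lra. Qed.

(** * The flow of a positive speed and the Picard scheme on T *)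

Section Flow.

Variable a : R -> R.
Variables m M : R.
Hypothesis Ha : continuity a.
Hypothesis Hm : 0 < m.
Hypothesis Hab : forall x, m <= a x <= M.

Lemma a_pos x : 0 < a x.
Proof. pose proof (Hab x); lra. Qed.

Lemma m_le_M : m <= M.
Proof. pose proof (Hab 0); lra. Qed.

Lemma continuity_inv_a : continuity (fun t => / a t).
Proof. intros x. apply continuity_pt_inv; [apply Ha|pose proof (a_pos x); lra]. Qed.

(* Travel time along the flow of [a]. *)
Definition Lam (x : R) : R := RInt (fun t => / a t) 0 x.

Lemma Lam_0 : Lam 0 = 0.
Proof. unfold Lam. rewrite RInt_point. reflexivity. Qed.

Lemma Lam_sub x y : Lam y - Lam x = RInt (fun t => / a t) x y.
Proof.
  unfold Lam. rewrite <- (RInt_Chasles _ 0 x y) by apply ex_RInt_continuity, continuity_inv_a.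
  change (plus ?u ?v) with (u + v). ring.
Qed.

Lemma Lam_sub_bounds x y : x <= y -> (y - x) / M <= Lam y - Lam x <= (y - x) / m.
Proof.
  intros Hxy. rewrite Lam_sub.
  assert (Hbd : forall t, / M <= / a t <= / m).
  { intros t. pose proof (Hab t). pose proof (a_pos t). split; apply Rinv_le_contravar; lra. }
  assert (Hex := ex_RInt_continuity _ x y continuity_inv_a).
  assert (Hconst : forall k, RInt (fun _ => k) x y = (y - x) * k).
  { intros k. rewrite RInt_const. reflexivity. }
  unfold Rdiv. rewrite <- !Hconst. split; apply RInt_le; auto using ex_RInt_const;
    intros t _; apply Hbd.
Qed.

Lemma Lam_lt x y : x < y -> Lam x < Lam y.
Proof.
  intros H. pose proof (Lam_sub_bounds x y ltac:(lra)). pose proof m_le_M.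
  assert (0 < (y - x) / M) by (apply Rdiv_lt_0_compat; lra). lra.
Qed.

Lemma Lam_inj x y : Lam x = Lam y -> x = y.
Proof.
  intros H. destruct (Rtotal_order x y) as [h|[h|h]]; [|exact h|];
    apply Lam_lt in h; lra.
Qed.

Lemma Lam_le_inv x y : Lam x <= Lam y -> x <= y.
Proof. intros H. destruct (Rle_dec x y) as [h|h]; [exact h|]. pose proof (Lam_lt y x ltac:(lra)); lra. Qed.

Lemma Lam_lip x y : Rabs (Lam y - Lam x) <= Rabs (y - x) / m.
Proof.
  pose proof m_le_M.
  destruct (Rle_dec x y) as [Hxy|Hxy].
  - pose proof (Lam_sub_bounds x y Hxy).
    assert (0 <= (y - x) / M) by (apply Rdiv_le_0_compat; lra).
    rewrite !Rabs_right; lra.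
  - pose proof (Lam_sub_bounds y x ltac:(lra)).
    assert (0 <= (x - y) / M) by (apply Rdiv_le_0_compat; lra).
    rewrite !Rabs_left1 by lra. replace (- (y - x) / m) with ((x - y) / m) by (field; lra). lra.
Qed.

Lemma continuity_Lam : continuity Lam.
Proof.
  apply continuity_of_eps. intros x eps He. exists (eps * m); split; [nra|].
  intros y Hy. eapply Rle_lt_trans; [apply Lam_lip|].
  apply (Rmult_lt_reg_r m); [exact Hm|]. unfold Rdiv. rewrite Rmult_assoc, Rinv_l; lra.
Qed.

Lemma Lam_derive x : is_derive Lam x (/ a x).
Proof.
  apply (is_derive_RInt (fun t => / a t) Lam 0 x).
  - apply filter_forall. intros y. apply (RInt_correct (V := R_CompleteNormedModule)).
    apply ex_RInt_continuity, continuity_inv_a.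
  - apply continuity_pt_filterlim, (continuity_inv_a x).
Qed.

Lemma Lam_surj y : exists x, Lam x = y.
Proof.
  set (X := M * (Rabs y + 1)).
  pose proof m_le_M. pose proof (Rabs_pos y).
  assert (HX : 0 < X) by (unfold X; nra).
  pose proof (Lam_sub_bounds 0 X ltac:(lra)). pose proof (Lam_sub_bounds (- X) 0 ltac:(lra)).
  rewrite Lam_0 in *.
  replace ((X - 0) / M) with (Rabs y + 1) in * by (unfold X; field; lra).
  replace ((0 - - X) / M) with (Rabs y + 1) in * by (unfold X; field; lra).
  destruct (IVT (fun x => Lam x - y) (- X) X) as [x [_ Hx]].
  - apply continuity_minus; [apply continuity_Lam|apply continuity_const; intros u v; reflexivity].
  - lra.
  - split_Rabs; lra.
  - split_Rabs; lra.
  - exists x; lra.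
Qed.

Definition Lam_inv (y : R) : R := epsilon (inhabits 0) (fun x => Lam x = y).

Lemma Lam_inv_K y : Lam (Lam_inv y) = y.
Proof. apply (epsilon_spec (inhabits 0) (fun x => Lam x = y)), Lam_surj. Qed.

Lemma Lam_K x : Lam_inv (Lam x) = x.
Proof. apply Lam_inj, Lam_inv_K. Qed.

Lemma Lam_inv_sub_bounds y y' : y <= y' ->
  m * (y' - y) <= Lam_inv y' - Lam_inv y <= M * (y' - y).
Proof.
  intros H. pose proof (Lam_inv_K y) as Ey. pose proof (Lam_inv_K y') as Ey'.
  assert (Hle : Lam_inv y <= Lam_inv y') by (apply Lam_le_inv; lra).
  pose proof (Lam_sub_bounds _ _ Hle) as Hb. rewrite Ey, Ey' in Hb. pose proof m_le_M.
  split.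
  - apply (Rmult_le_reg_r (/ m)); [apply Rinv_0_lt_compat; exact Hm|].
    replace (m * (y' - y) * / m) with (y' - y) by (field; lra). unfold Rdiv in Hb. lra.
  - apply (Rmult_le_reg_r (/ M)); [apply Rinv_0_lt_compat; lra|].
    replace (M * (y' - y) * / M) with (y' - y) by (field; lra). unfold Rdiv in Hb. lra.
Qed.

Lemma Lam_inv_lip y y' : Rabs (Lam_inv y' - Lam_inv y) <= M * Rabs (y' - y).
Proof.
  pose proof m_le_M.
  destruct (Rle_dec y y') as [Hy|Hy].
  - pose proof (Lam_inv_sub_bounds y y' Hy). rewrite !Rabs_right; nra.
  - pose proof (Lam_inv_sub_bounds y' y ltac:(lra)). rewrite !Rabs_left1; nra.
Qed.

Lemma continuity_Lam_inv : continuity Lam_inv.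
Proof.
  apply continuity_of_eps. intros x eps He. pose proof m_le_M.
  exists (eps / M); split; [apply Rdiv_lt_0_compat; lra|].
  intros y Hy. eapply Rle_lt_trans; [apply Lam_inv_lip|].
  apply (Rmult_lt_reg_r (/ M)); [apply Rinv_0_lt_compat; lra|].
  replace (M * Rabs (y - x) * / M) with (Rabs (y - x)) by (field; lra). exact Hy.
Qed.

Lemma Lam_inv_derive y : is_derive Lam_inv y (a (Lam_inv y)).
Proof.
  assert (Hd : forall t, derivable_pt Lam t)
    by (intros t; exists (/ a t); apply is_derive_Reals, Lam_derive).
  assert (Hmono : forall u v, u <= v -> Lam_inv u <= Lam_inv v)
    by (intros u v H; pose proof (Lam_inv_sub_bounds u v H); pose proof m_le_M; nra).
  assert (Hincr : Lam_inv (y - 1) <= Lam_inv y <= Lam_inv (y + 1)) by (split; apply Hmono; lra).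
  assert (Hlim := derivable_pt_lim_recip_interv Lam Lam_inv (y - 1) (y + 1) y
    (fun t _ => Hd t) (continuity_Lam_inv y) ltac:(lra) ltac:(lra) Hincr
    (fun t _ => Lam_inv_K t)).
  cbv beta in Hlim.
  replace (derive_pt Lam (Lam_inv y) (Hd (Lam_inv y))) with (/ a (Lam_inv y)) in Hlim
    by (symmetry; apply derive_pt_eq_0, is_derive_Reals, Lam_derive).
  pose proof (a_pos (Lam_inv y)).
  apply is_derive_Reals. replace (a (Lam_inv y)) with (1 / / a (Lam_inv y)) by (field; lra).
  apply Hlim, Rinv_neq_0_compat. lra.
Qed.

Definition flow (z s : R) : R := Lam_inv (Lam z + s).

Lemma flow_0 z : flow z 0 = z.
Proof. unfold flow. rewrite Rplus_0_r. apply Lam_K. Qed.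

Lemma flow_add z s t : flow (flow z s) t = flow z (s + t).
Proof. unfold flow. rewrite Lam_inv_K. f_equal; ring. Qed.

Lemma Lam_flow z s : Lam (flow z s) = Lam z + s.
Proof. apply Lam_inv_K. Qed.

Lemma flow_to_0 w : flow w (Lam 0 - Lam w) = 0.
Proof. unfold flow. replace (Lam w + (Lam 0 - Lam w)) with (Lam 0) by ring. apply Lam_K. Qed.

Lemma flow_derive z s : is_derive (flow z) s (a (flow z s)).
Proof.
  unfold flow.
  assert (H := is_derive_comp Lam_inv (fun s => Lam z + s) s _ _ (Lam_inv_derive (Lam z + s))
     (is_derive_plus _ _ s 0 1 (is_derive_const (Lam z) s) (is_derive_id s))).
  simpl in H. change (scal ?u ?v) with (u * v) in H. change (plus ?u ?v) with (u + v) in H.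
  rewrite Rplus_0_l, Rmult_1_l in H. exact H.
Qed.

Lemma flow_sub_bounds z s t : s <= t -> m * (t - s) <= flow z t - flow z s <= M * (t - s).
Proof.
  intros H. unfold flow. pose proof (Lam_inv_sub_bounds (Lam z + s) (Lam z + t) ltac:(lra)).
  replace (Lam z + t - (Lam z + s)) with (t - s) in H0 by ring. exact H0.
Qed.

Lemma flow_le z z' s : z <= z' -> flow z s <= flow z' s.
Proof.
  intros H. destruct (Req_dec z z') as [->|Hn]; [lra|].
  pose proof (Lam_lt z z' ltac:(lra)).
  pose proof (Lam_inv_sub_bounds (Lam z + s) (Lam z' + s) ltac:(lra)). unfold flow. nra.
Qed.

Lemma flow_lip z z' s s' : Rabs (flow z' s' - flow z s) <= M * (Rabs (z' - z) / m + Rabs (s' - s)).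
Proof.
  unfold flow. eapply Rle_trans; [apply Lam_inv_lip|]. pose proof m_le_M.
  apply Rmult_le_compat_l; [lra|].
  replace (Lam z' + s' - (Lam z + s)) with ((Lam z' - Lam z) + (s' - s)) by ring.
  eapply Rle_trans; [apply Rabs_triang|]. pose proof (Lam_lip z z'). lra.
Qed.

Lemma continuity_flow z : continuity (flow z).
Proof.
  intros s. apply derivable_continuous_pt. exists (a (flow z s)).
  apply is_derive_Reals, flow_derive.
Qed.

(* Along a characteristic [c' = a(c)], the quantity [Lam(c s) - s] is constant. *)
Lemma char_flow (c : R -> R) (s0 s1 : R) : s0 <= s1 ->
  has_deriv_on s0 s1 c (fun s => a (c s)) ->
  forall s, inI s0 s1 s -> c s = flow (c s0) (s - s0).
Proof.
  intros Hs Hd s Hs'.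
  assert (Hcont : cont_on s0 s1 (fun s => Lam (c s) - s)).
  { intros x Hx eps He.
    destruct (continuity_eps _ continuity_Lam (c x) (eps / 2) ltac:(lra)) as [d1 [Hd1 H1]].
    destruct (has_deriv_on_cont_on _ _ _ _ Hd x Hx d1 Hd1) as [d2 [Hd2 H2]].
    exists (Rmin d2 (eps / 2)); split; [apply Rmin_pos; lra|].
    intros y Hy Hyx. pose proof (Rmin_l d2 (eps / 2)). pose proof (Rmin_r d2 (eps / 2)).
    specialize (H1 _ (H2 y Hy ltac:(lra))). split_Rabs; lra. }
  assert (Hderiv : forall x, s0 < x < s1 -> is_derive (fun s => Lam (c s) - s) x 0).
  { intros x Hx.
    assert (D := is_derive_minus _ _ x _ _
      (is_derive_comp Lam c x _ _ (Lam_derive (c x)) (has_deriv_on_is_derive s0 s1 c _ x Hd Hx))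
      (is_derive_id x)).
    simpl in D. change (scal ?u ?v) with (u * v) in D. change (minus ?u ?v) with (u - v) in D.
    replace 0 with (a (c x) * / a (c x) - 1) by (field; pose proof (a_pos (c x)); lra).
    exact D. }
  pose proof (cont_on_const_of_derive_0 _ s0 s1 Hs Hcont Hderiv s Hs').
  apply Lam_inj. rewrite Lam_flow. lra.
Qed.

Definition flow_sum (z w s : R) : R := flow z s + flow w s.

Lemma flow_sum_sub_bound z w s t : s <= t -> 2 * m * (t - s) <= flow_sum z w t - flow_sum z w s.
Proof.
  intros H. unfold flow_sum.
  pose proof (flow_sub_bounds z s t H). pose proof (flow_sub_bounds w s t H). lra.
Qed.

Lemma continuity_flow_sum z w : continuity (flow_sum z w).
Proof. apply continuity_plus; apply continuity_flow. Qed.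

Lemma hit_time_exists z w : inT z w ->
  exists s, Lam 0 - Lam w <= s <= 0 /\ flow_sum z w s = 0.
Proof.
  intros [Hw Hz].
  set (s0 := Lam 0 - Lam w).
  assert (Hs0 : s0 <= 0).
  { unfold s0. pose proof (Lam_sub_bounds 0 w ltac:(lra)). pose proof m_le_M.
    assert (0 <= (w - 0) / M) by (apply Rdiv_le_0_compat; lra). lra. }
  assert (G0 : flow_sum z w 0 = z + w) by (unfold flow_sum; rewrite !flow_0; reflexivity).
  assert (G1 : flow_sum z w s0 <= 0).
  { unfold flow_sum, s0. rewrite flow_to_0.
    pose proof (flow_le z w (Lam 0 - Lam w) ltac:(lra)). rewrite flow_to_0 in H. lra. }
  destruct (IVT_cor (flow_sum z w) s0 0 (continuity_flow_sum z w) Hs0) as [x [Hx Hx']].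
  - rewrite G0. nra.
  - exists x. split; [unfold s0 in Hx; exact Hx|exact Hx'].
Qed.

(* The backward characteristic through (z,w) meets the line {z + w = 0} at time [hit_time z w <= 0]. *)
Definition hit_time (z w : R) : R :=
  epsilon (inhabits 0) (fun s => Lam 0 - Lam w <= s <= 0 /\ flow_sum z w s = 0).

Lemma hit_time_spec z w : inT z w ->
  Lam 0 - Lam w <= hit_time z w <= 0 /\ flow_sum z w (hit_time z w) = 0.
Proof.
  intros H. apply (epsilon_spec (inhabits 0) (fun s => Lam 0 - Lam w <= s <= 0 /\ flow_sum z w s = 0)).
  apply hit_time_exists, H.
Qed.

Lemma hit_time_unique z w s : inT z w -> flow_sum z w s = 0 -> s = hit_time z w.
Proof.
  intros H Hs. destruct (hit_time_spec z w H) as [_ E].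
  destruct (Rtotal_order s (hit_time z w)) as [h|[h|h]]; [|exact h|].
  - pose proof (flow_sum_sub_bound z w s (hit_time z w) ltac:(lra)). nra.
  - pose proof (flow_sum_sub_bound z w (hit_time z w) s ltac:(lra)). nra.
Qed.

Lemma hit_time_bounds z w : inT z w -> - (1 / m) <= hit_time z w <= 0.
Proof.
  intros H. destruct (hit_time_spec z w H) as [[H1 H2] _]. split; [|exact H2].
  destruct H as [Hw _]. pose proof (Lam_sub_bounds 0 w ltac:(lra)).
  assert ((w - 0) / m <= 1 / m) by (unfold Rdiv; apply Rmult_le_compat_r; [left; apply Rinv_0_lt_compat; lra|lra]).
  lra.
Qed.

Lemma hit_time_lip z w z' w' : inT z w -> inT z' w' ->
  Rabs (hit_time z' w' - hit_time z w) <= M / (2 * m * m) * (Rabs (z' - z) + Rabs (w' - w)).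
Proof.
  intros H H'. destruct (hit_time_spec z w H) as [_ E]. destruct (hit_time_spec z' w' H') as [_ E'].
  set (s := hit_time z w) in *. set (s' := hit_time z' w') in *.
  assert (Hd : Rabs (flow_sum z w s') <= M / m * (Rabs (z' - z) + Rabs (w' - w))).
  { replace (flow_sum z w s') with ((flow z s' - flow z' s') + (flow w s' - flow w' s'))
      by (unfold flow_sum in *; lra).
    pose proof (flow_lip z' z s' s') as Lz. pose proof (flow_lip w' w s' s') as Lw.
    rewrite Rminus_diag, Rabs_R0, Rplus_0_r in Lz, Lw.
    rewrite (Rabs_minus_sym z' z), (Rabs_minus_sym w' w).
    eapply Rle_trans; [apply Rabs_triang|].
    replace (M / m * (Rabs (z - z') + Rabs (w - w'))) with (M * (Rabs (z - z') / m) + M * (Rabs (w - w') / m))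
      by (field; lra).
    apply Rplus_le_compat; assumption. }
  assert (Hgrow : 2 * m * Rabs (s' - s) <= Rabs (flow_sum z w s')).
  { destruct (Rle_dec s s') as [h|h].
    - pose proof (flow_sum_sub_bound z w s s' h). rewrite E in H0. rewrite !Rabs_right; nra.
    - pose proof (flow_sum_sub_bound z w s' s ltac:(lra)). rewrite E in H0.
      rewrite !Rabs_left1 by nra. nra. }
  apply (Rmult_le_reg_l (2 * m)); [lra|].
  replace (2 * m * (M / (2 * m * m) * (Rabs (z' - z) + Rabs (w' - w)))) with
     (M / m * (Rabs (z' - z) + Rabs (w' - w))) by (field; lra).
  lra.
Qed.

Lemma flow_in_T z w s : inT z w -> hit_time z w <= s <= 0 -> inT (flow z s) (flow w s).
Proof.
  intros H Hs. destruct (hit_time_spec z w H) as [[Hs0 _] E].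
  destruct H as [Hw Hz]. pose proof m_le_M.
  assert (A1 : 0 <= flow w s).
  { pose proof (flow_sub_bounds w (Lam 0 - Lam w) s ltac:(lra)) as P.
    rewrite flow_to_0 in P. nra. }
  assert (A2 : flow w s <= w) by (pose proof (flow_sub_bounds w s 0 ltac:(lra)); rewrite flow_0 in *; nra).
  assert (A3 : flow z s <= flow w s) by (apply flow_le; lra).
  assert (A4 : 0 <= flow_sum z w s) by (pose proof (flow_sum_sub_bound z w (hit_time z w) s ltac:(lra)); nra).
  unfold flow_sum in A4. split; lra.
Qed.

Lemma hit_time_antidiag w : 0 <= w <= 1 -> hit_time (- w) w = 0.
Proof.
  intros H. symmetry. apply hit_time_unique; [split; lra|].
  unfold flow_sum. rewrite !flow_0. ring.
Qed.

Lemma hit_time_flow z w t : inT z w -> inT (flow z t) (flow w t) ->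
  hit_time (flow z t) (flow w t) = hit_time z w - t.
Proof.
  intros H H'. symmetry. apply hit_time_unique; [exact H'|].
  unfold flow_sum. rewrite !flow_add. replace (t + (hit_time z w - t)) with (hit_time z w) by ring.
  apply hit_time_spec, H.
Qed.

Lemma flow_drift z t : Rabs (flow z t - z) <= M * Rabs t.
Proof.
  pose proof (flow_lip z z 0 t) as H. rewrite flow_0, Rminus_diag, Rabs_R0, Rminus_0_r in H.
  unfold Rdiv in H. rewrite Rmult_0_l, Rplus_0_l in H. exact H.
Qed.

Lemma flow_spread z z' t : Rabs (flow z' t - flow z t) <= M / m * Rabs (z' - z).
Proof.
  pose proof (flow_lip z z' t t) as H. rewrite Rminus_diag, Rabs_R0, Rplus_0_r in H.
  unfold Rdiv in *. lra.
Qed.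

Lemma flow_in_box z t : -1 <= z <= 1 -> - (1 / m) <= t <= 0 ->
  - (1 + M / m) <= flow z t <= 1 + M / m.
Proof.
  intros Hz Ht. pose proof (flow_drift z t). pose proof m_le_M.
  assert (M * Rabs t <= M / m).
  { rewrite Rabs_left1 by lra. unfold Rdiv in *. apply Rmult_le_compat_l; lra. }
  split_Rabs; lra.
Qed.

Lemma cont_T_flow_endpoint (h : R -> R) : continuity h ->
  cont_T (fun z w => h (flow w (hit_time z w))).
Proof.
  intros Hh z w HP eps He.
  destruct (continuity_eps h Hh (flow w (hit_time z w)) eps He) as [d [Hd H]].
  set (K := M * (1 / m + 2 * (M / (2 * m * m)))).
  assert (HK : 0 < K).
  { pose proof m_le_M. unfold K. assert (0 < 1 / m) by (apply Rdiv_lt_0_compat; lra).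
    assert (0 < M / (2 * m * m)) by (apply Rdiv_lt_0_compat; nra). nra. }
  exists (d / K); split; [apply Rdiv_lt_0_compat; lra|].
  intros z' w' HQ Hz Hw. apply H.
  eapply Rle_lt_trans; [apply flow_lip|].
  pose proof (hit_time_lip z w z' w' HP HQ). pose proof m_le_M.
  assert (HKs : 0 < M / (2 * m * m)) by (apply Rdiv_lt_0_compat; nra).
  apply Rlt_le_trans with (M * (d / K / m + M / (2 * m * m) * (d / K + d / K)));
    [|right; unfold K; field; split; lra].
  apply Rmult_lt_compat_l; [lra|]. apply Rplus_lt_le_compat.
  - unfold Rdiv. apply Rmult_lt_compat_r; [apply Rinv_0_lt_compat; lra|exact Hw].
  - eapply Rle_trans; [eassumption|]. apply Rmult_le_compat_l; lra.
Qed.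

Definition flow_integral (F : R -> R -> R) (z w : R) : R :=
  RInt (fun s => F (flow z s) (flow w s)) (hit_time z w) 0.

Lemma continuity_along_flow (F : R -> R -> R) z w : cont2 F ->
  continuity (fun s => F (flow z s) (flow w s)).
Proof. intros H. apply cont2_comp; [exact H|apply continuity_flow|apply continuity_flow]. Qed.

Lemma ex_RInt_along_flow (F : R -> R -> R) z w x y : cont2 F ->
  ex_RInt (fun s => F (flow z s) (flow w s)) x y.
Proof. intros H. apply ex_RInt_continuity, continuity_along_flow, H. Qed.

Lemma flow_integral_sub (F : R -> R -> R) z w z' w' : cont2 F ->
  flow_integral F z' w' - flow_integral F z w =
  RInt (fun t => F (flow z' t) (flow w' t) - F (flow z t) (flow w t)) (hit_time z' w') 0 +
  RInt (fun t => F (flow z t) (flow w t)) (hit_time z' w') (hit_time z w).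
Proof.
  intros HF. unfold flow_integral.
  rewrite (RInt_minus (V := R_CompleteNormedModule)) by apply ex_RInt_along_flow, HF.
  rewrite <- (RInt_Chasles (V := R_CompleteNormedModule) (fun t => F (flow z t) (flow w t))
    (hit_time z' w') (hit_time z w) 0) by apply ex_RInt_along_flow, HF.
  change (minus ?u ?v) with (u - v). change (plus ?u ?v) with (u + v). ring.
Qed.

Lemma along_flow_bounded (F : R -> R -> R) : cont2 F -> exists B, 0 <= B /\
  forall z w t, -1 <= z <= 1 -> -1 <= w <= 1 -> - (1 / m) <= t <= 0 ->
    Rabs (F (flow z t) (flow w t)) <= B.
Proof.
  intros HF. assert (Hr : 0 < 1 + M / m).
  { pose proof m_le_M. assert (0 < M / m) by (apply Rdiv_lt_0_compat; lra). lra. }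
  destruct (cont2_bounded_box F _ Hr HF) as [B [HB0 HB]].
  exists B. split; [exact HB0|]. intros z w t Hz Hw Ht. apply HB; apply flow_in_box; assumption.
Qed.

Lemma along_flow_unif_cont (F : R -> R -> R) : cont2 F -> forall eta, 0 < eta ->
  exists d, 0 < d /\ forall z w z' w' t, -1 <= z <= 1 -> -1 <= w <= 1 -> -1 <= z' <= 1 ->
    -1 <= w' <= 1 -> - (1 / m) <= t <= 0 -> Rabs (z' - z) < d -> Rabs (w' - w) < d ->
    Rabs (F (flow z' t) (flow w' t) - F (flow z t) (flow w t)) < eta.
Proof.
  intros HF eta Heta. set (r := 1 + M / m). pose proof m_le_M.
  destruct (uniform_continuity_2d F (- r) r (- r) r (fun z w _ _ => HF z w) (mkposreal eta Heta))
    as [d1 Hd1]; simpl in Hd1. pose proof (cond_pos d1).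
  exists (d1 * m / (2 * M)). split; [apply Rdiv_lt_0_compat; nra|].
  assert (Hclose : forall x x' t, Rabs (x' - x) < d1 * m / (2 * M) -> Rabs (flow x' t - flow x t) < d1).
  { intros x x' t Hx. eapply Rle_lt_trans; [apply flow_spread|].
    apply Rle_lt_trans with (M / m * (d1 * m / (2 * M)));
      [|replace (M / m * (d1 * m / (2 * M))) with (d1 / 2) by (field; split; lra); lra].
    apply Rmult_le_compat_l; [apply Rdiv_le_0_compat|]; lra. }
  intros z w z' w' t Hz Hw Hz' Hw' Ht Hzz Hww.
  apply Hd1; try (apply flow_in_box; assumption); apply Hclose; assumption.
Qed.

Lemma cont_T_flow_integral (F : R -> R -> R) : cont2 F -> cont_T (flow_integral F).
Proof.
  intros HF z w HP eps He.
  destruct (along_flow_bounded F HF) as [B [HB0 HB]].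
  destruct (along_flow_unif_cont F HF (eps * m / 3) ltac:(nra)) as [d1 [Hd1 Hclose]].
  set (Ks := M / (2 * m * m)).
  assert (HKs : 0 < Ks) by (unfold Ks; pose proof m_le_M; apply Rdiv_lt_0_compat; nra).
  set (e2 := eps / (6 * (B + 1) * (Ks + 1))).
  assert (He2 : 0 < e2) by (apply Rdiv_lt_0_compat; nra).
  exists (Rmin d1 e2); split; [apply Rmin_pos; assumption|].
  pose proof (Rmin_l d1 e2). pose proof (Rmin_r d1 e2).
  intros z' w' HQ Hz Hw.
  set (s := hit_time z w). set (s' := hit_time z' w').
  pose proof (hit_time_bounds z w HP) as Bs. pose proof (hit_time_bounds z' w' HQ) as Bs'.
  fold s in Bs. fold s' in Bs'.
  assert (Hone : forall x y, inT x y -> -1 <= x <= 1 /\ -1 <= y <= 1) by (intros x y [? ?]; split; lra).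
  destruct (Hone z w HP) as [Hz0 Hw0]. destruct (Hone z' w' HQ) as [Hz1 Hw1].
  assert (T1 : Rabs (RInt (fun t => F (flow z' t) (flow w' t) - F (flow z t) (flow w t)) s' 0) <= eps / 3).
  { eapply Rle_trans.
    - apply abs_RInt_le_const with (M := eps * m / 3); [lra| |].
      + apply (ex_RInt_minus (V := R_NormedModule)); apply ex_RInt_along_flow, HF.
      + intros t Ht. left. apply Hclose; try assumption; try split; lra.
    - apply Rle_trans with (1 / m * (eps * m / 3)); [apply Rmult_le_compat_r; [nra|lra]|].
      right. field. lra. }
  assert (T2 : Rabs (RInt (fun t => F (flow z t) (flow w t)) s' s) <= eps / 3).
  { assert (Hbd : forall t, Rmin s' s <= t <= Rmax s' s -> Rabs (F (flow z t) (flow w t)) <= B).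
    { intros t Ht. apply HB; try assumption.
      split; [apply Rle_trans with (Rmin s' s); [apply Rmin_glb|]|
              apply Rle_trans with (Rmax s' s); [|apply Rmax_lub]]; lra. }
    assert (Hn := norm_RInt_le_const_abs (V := R_NormedModule) _ s' s _ B Hbd
      (RInt_correct (V := R_CompleteNormedModule) _ _ _ (ex_RInt_along_flow F z w s' s HF))).
    change norm with Rabs in Hn. eapply Rle_trans; [exact Hn|].
    pose proof (hit_time_lip z w z' w' HP HQ) as Hs. fold Ks s s' in Hs.
    assert (Rabs (s - s') <= Ks * (2 * e2)) by (rewrite Rabs_minus_sym; nra).
    apply Rle_trans with (Ks * (2 * e2) * B); [apply Rmult_le_compat_r; assumption|].
    apply Rle_trans with ((Ks + 1) * (2 * e2) * (B + 1)); [apply Rmult_le_compat; nra|].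
    right. unfold e2. field. lra. }
  rewrite (flow_integral_sub F z w z' w' HF). fold s s'.
  eapply Rle_lt_trans; [apply Rabs_triang|]. lra.
Qed.

Lemma char_mono (c : R -> R) (s0 s1 : R) : s0 <= s1 -> has_deriv_on s0 s1 c (fun s => a (c s)) ->
  forall s s', inI s0 s1 s -> inI s0 s1 s' -> s <= s' -> c s <= c s'.
Proof.
  intros Hs Hc s s' H1 H2 H3. rewrite (char_flow c s0 s1 Hs Hc s H1), (char_flow c s0 s1 Hs Hc s' H2).
  pose proof (flow_sub_bounds (c s0) (s - s0) (s' - s0) ltac:(lra)). nra.
Qed.

Lemma char_crossing (c : R -> R) (s0 s1 : R) : s0 <= s1 -> has_deriv_on s0 s1 c (fun s => a (c s)) ->
  c s0 < 0 < c s1 -> exists ss, s0 <= ss <= s1 /\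
    (forall s, inI s0 ss s -> c s <= 0) /\ (forall s, inI ss s1 s -> 0 <= c s).
Proof.
  intros Hs Hc [H0 H1].
  set (ss := s0 + (Lam 0 - Lam (c s0))).
  assert (Hss0 : s0 <= ss) by (pose proof (Lam_lt (c s0) 0 H0); unfold ss; lra).
  assert (Hval : forall t, s0 <= t <= s1 -> c t = flow (c s0) (t - s0))
    by (intros t Ht; apply (char_flow c s0 s1 Hs Hc); exact Ht).
  assert (Hss1 : ss <= s1).
  { destruct (Rle_dec ss s1) as [h|h]; [exact h|exfalso]. apply Rnot_le_lt in h.
    pose proof (flow_sub_bounds (c s0) (s1 - s0) (ss - s0) ltac:(lra)) as Hb.
    replace (ss - s0) with (Lam 0 - Lam (c s0)) in Hb by (unfold ss; ring).
    rewrite flow_to_0, <- Hval in Hb by lra.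
    assert (0 < m * (ss - s1)) by (apply Rmult_lt_0_compat; lra). unfold ss in *. lra. }
  assert (Hzero : c ss = 0).
  { rewrite Hval by lra. replace (ss - s0) with (Lam 0 - Lam (c s0)) by (unfold ss; ring). apply flow_to_0. }
  exists ss. split; [lra|split]; intros s Hs'; rewrite <- Hzero;
    apply (char_mono c s0 s1 Hs Hc); unfold inI in *; lra.
Qed.

Lemma char_solution_of_halves (az aw : R -> R) (L F : R -> R -> R) :
  (forall x, -1 <= x <= 1 -> aw x = a x) ->
  (forall s0 s1 zc wc, char_curve az aw s0 s1 zc wc -> (forall s, inI s0 s1 s -> 0 <= wc s) ->
     is_RInt (fun s => F (zc s) (wc s)) s0 s1 (L (zc s1) (wc s1) - L (zc s0) (wc s0))) ->
  (forall s0 s1 zc wc, char_curve az aw s0 s1 zc wc -> (forall s, inI s0 s1 s -> wc s <= 0) ->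
     is_RInt (fun s => F (zc s) (wc s)) s0 s1 (L (zc s1) (wc s1) - L (zc s0) (wc s0))) ->
  char_solution az aw L F.
Proof.
  intros Haw HP HN s0 s1 zc wc Hc.
  destruct Hc as [Hs [Hz [Hw Hin]]] eqn:Hc'. clear Hc'.
  assert (Hwa : has_deriv_on s0 s1 wc (fun s => a (wc s))).
  { eapply has_deriv_on_ext; [|exact Hw]. intros s Hs'. apply Haw, (inE_bounds _ _ (Hin s Hs')). }
  assert (Mono := char_mono wc s0 s1 Hs Hwa).
  assert (Hs0 : inI s0 s1 s0) by (unfold inI; lra). assert (Hs1 : inI s0 s1 s1) by (unfold inI; lra).
  destruct (Rle_dec 0 (wc s0)) as [H0|H0].
  { apply HP; [exact Hc|]. intros s Hs'. pose proof (Mono s0 s Hs0 Hs' ltac:(unfold inI in *; lra)). lra. }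
  destruct (Rle_dec (wc s1) 0) as [H1|H1].
  { apply HN; [exact Hc|]. intros s Hs'. pose proof (Mono s s1 Hs' Hs1 ltac:(unfold inI in *; lra)). lra. }
  destruct (char_crossing wc s0 s1 Hs Hwa ltac:(lra)) as [ss [Hss [Hneg Hpos]]].
  assert (Hsub : forall t0 t1, s0 <= t0 <= t1 -> t1 <= s1 -> char_curve az aw t0 t1 zc wc).
  { intros t0 t1 Ht0 Ht1. refine (conj (proj2 Ht0) (conj _ (conj _ _)));
      [apply (has_deriv_on_sub s0 s1); auto; lra..|].
    intros s Hs'. apply Hin. unfold inI in *; lra. }
  assert (I1 := HN s0 ss zc wc (Hsub s0 ss ltac:(lra) ltac:(lra)) Hneg).
  assert (I2 := HP ss s1 zc wc (Hsub ss s1 ltac:(lra) ltac:(lra)) Hpos).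
  replace (L (zc s1) (wc s1) - L (zc s0) (wc s0)) with
    ((L (zc ss) (wc ss) - L (zc s0) (wc s0)) + (L (zc s1) (wc s1) - L (zc ss) (wc ss))) by ring.
  exact (is_RInt_Chasles _ _ _ _ _ _ I1 I2).
Qed.

Section Picard.

(* A pair of unknowns is encoded as [u : bool -> R -> R -> R]; the system is
   [a(w) u_w + a(z) u_z = G u i] on T with [u i (-w) w = g i w]. *)
Variable G : (bool -> R -> R -> R) -> bool -> R -> R -> R.
Variable g : bool -> R -> R.
Hypothesis HG_cont : forall u, (forall i, cont2 (u i)) -> forall i, cont2 (G u i).
Hypothesis Hg_cont : forall i, continuity (g i).
Variable C : R.
Hypothesis HC : 0 <= C.
Hypothesis HG_lip : forall u v (rho : R -> R),
  (forall i z w, inT z w -> Rabs (u i z w - v i z w) <= rho w) ->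
  forall i z w, inT z w -> Rabs (G u i z w - G v i z w) <= C * rho w.

Definition picard (u : bool -> R -> R -> R) (i : bool) (z w : R) : R :=
  g i (flow w (hit_time z w)) + flow_integral (G u i) z w.

Definition picard_ext (u : bool -> R -> R -> R) (i : bool) (z w : R) : R :=
  picard u i (proj_z z w) (proj_w w).

Lemma cont_T_picard u : (forall i, cont2 (u i)) -> forall i, cont_T (picard u i).
Proof.
  intros Hu i. apply cont_T_plus.
  - apply cont_T_flow_endpoint, Hg_cont.
  - apply cont_T_flow_integral, HG_cont, Hu.
Qed.

Lemma cont2_picard_ext u : (forall i, cont2 (u i)) -> forall i, cont2 (picard_ext u i).
Proof. intros Hu i. apply cont2_proj, cont_T_picard, Hu. Qed.

Lemma picard_ext_T u i z w : inT z w -> picard_ext u i z w = picard u i z w.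
Proof. intros H. unfold picard_ext. destruct (proj_id z w H) as [-> ->]. reflexivity. Qed.

(* Bielecki-type weight: in the norm [sup |u| / weight] the map [picard] is a contraction with constant 1/2. *)
Definition weight_rate : R := 2 * C + 1.

Definition weight (w : R) : R := exp (weight_rate * (Lam w - Lam 0)).

Lemma weight_rate_pos : 0 < weight_rate.
Proof. unfold weight_rate. lra. Qed.

Lemma weight_ge_1 w : 0 <= w -> 1 <= weight w.
Proof.
  intros H. pose proof (Lam_lt 0 w). pose proof weight_rate_pos.
  assert (0 <= weight_rate * (Lam w - Lam 0)).
  { destruct (Req_dec w 0) as [->|]; [lra|]. apply Rmult_le_pos; [lra|]. pose proof (Lam_lt 0 w ltac:(lra)); lra. }
  pose proof (exp_ineq1_le (weight_rate * (Lam w - Lam 0))). unfold weight. lra.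
Qed.

Lemma weight_le_1 w : w <= 1 -> weight w <= weight 1.
Proof.
  intros H. unfold weight. destruct (Req_dec w 1) as [->|E]; [lra|].
  left. apply exp_increasing. pose proof (Lam_lt w 1 ltac:(lra)). pose proof weight_rate_pos. nra.
Qed.

Lemma picard_contraction u v Bn : 0 <= Bn ->
  (forall i z w, inT z w -> ex_RInt (fun s => G u i (flow z s) (flow w s)) (hit_time z w) 0) ->
  (forall i z w, inT z w -> ex_RInt (fun s => G v i (flow z s) (flow w s)) (hit_time z w) 0) ->
  (forall i z w, inT z w -> Rabs (u i z w - v i z w) <= Bn * weight w) ->
  forall i z w, inT z w -> Rabs (picard u i z w - picard v i z w) <= Bn / 2 * weight w.
Proof.
  intros HB Eu Ev H i z w HP.
  set (s := hit_time z w).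
  destruct (hit_time_spec z w HP) as [[Hs1 Hs2] _]. fold s in Hs1, Hs2.
  pose proof (Eu i z w HP) as Exu. pose proof (Ev i z w HP) as Exv. fold s in Exu, Exv.
  set (c := Lam w - Lam 0). set (k := weight_rate). pose proof weight_rate_pos as Hk. fold k in Hk.
  destruct (RInt_exp_le (C * Bn) k c s ltac:(nra) Hk Hs2) as [Exh Hint].
  unfold picard, flow_integral. fold s.
  assert (E : g i (flow w s) + RInt (fun t => G u i (flow z t) (flow w t)) s 0 -
     (g i (flow w s) + RInt (fun t => G v i (flow z t) (flow w t)) s 0) =
     RInt (fun t => G u i (flow z t) (flow w t) - G v i (flow z t) (flow w t)) s 0).
  { rewrite (RInt_minus (V := R_CompleteNormedModule)) by assumption.
    change (minus ?x ?y) with (x - y). ring. }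
  rewrite E.
  eapply Rle_trans; [apply (Rabs_RInt_le _ (fun t => C * Bn * exp (k * (c + t)))); [lra| |exact Exh|]|].
  - apply (ex_RInt_minus (V := R_NormedModule)); assumption.
  - intros t Ht. eapply Rle_trans; [apply (HG_lip u v (fun w => Bn * weight w)); auto|].
    + apply flow_in_T; [exact HP|fold s; lra].
    + unfold weight. rewrite Lam_flow. right. fold k. unfold c.
      replace (Lam w + t - Lam 0) with (Lam w - Lam 0 + t) by ring. ring.
  - eapply Rle_trans; [exact Hint|]. unfold weight. fold k c.
    apply (Rmult_le_reg_r k); [lra|].
    replace (C * Bn * exp (k * c) / k * k) with (C * Bn * exp (k * c)) by (field; lra).
    replace (Bn / 2 * exp (k * c) * k) with ((C + / 2) * Bn * exp (k * c)) by (unfold k, weight_rate; field).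
    pose proof (exp_pos (k * c)). assert (0 <= Bn * exp (k * c)) by nra. nra.
Qed.

Fixpoint picard_iter (n : nat) : bool -> R -> R -> R :=
  match n with O => fun _ _ _ => 0 | S n => picard_ext (picard_iter n) end.

Lemma cont2_picard_iter n i : cont2 (picard_iter n i).
Proof.
  revert i. induction n as [|n IH]; intros i.
  - intros z w. apply continuity_2d_pt_const.
  - apply cont2_picard_ext, IH.
Qed.

Lemma picard_iter_proj n i z w : picard_iter n i z w = picard_iter n i (proj_z z w) (proj_w w).
Proof.
  destruct n as [|n]; [reflexivity|]. simpl. unfold picard_ext.
  destruct (proj_id _ _ (proj_in z w)) as [-> ->]. reflexivity.
Qed.

Lemma ex_RInt_G (u : bool -> R -> R -> R) i z w x y : (forall i, cont2 (u i)) ->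
  ex_RInt (fun s => G u i (flow z s) (flow w s)) x y.
Proof. intros H. apply ex_RInt_along_flow, HG_cont, H. Qed.

Lemma picard_iter_step_bound :
  exists A, 0 <= A /\ forall n i z w, Rabs (picard_iter (S n) i z w - picard_iter n i z w) <= A / 2 ^ n.
Proof.
  destruct (cont2_bounded_box _ 1 Rlt_0_1 (cont2_picard_iter 1 true)) as [b1 [Hb1 Q1]].
  destruct (cont2_bounded_box _ 1 Rlt_0_1 (cont2_picard_iter 1 false)) as [b2 [Hb2 Q2]].
  set (B0 := b1 + b2).
  assert (HB0 : forall i z w, inT z w -> Rabs (picard_iter 1 i z w) <= B0).
  { intros [|] z w [? ?]; [specialize (Q1 z w)|specialize (Q2 z w)]; unfold B0; lra. }
  assert (HT : forall n i z w, inT z w ->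
    Rabs (picard_iter (S n) i z w - picard_iter n i z w) <= B0 / 2 ^ n * weight w).
  { induction n as [|n IH]; intros i z w HP.
    - simpl pow. rewrite Rdiv_1_r. simpl picard_iter at 2. rewrite Rminus_0_r.
      pose proof (weight_ge_1 w ltac:(destruct HP; lra)). pose proof (HB0 i z w HP).
      assert (0 <= B0) by (unfold B0; lra). nra.
    - change (picard_iter (S (S n)) i z w) with (picard_ext (picard_iter (S n)) i z w).
      change (picard_iter (S n) i z w) with (picard_ext (picard_iter n) i z w).
      rewrite !picard_ext_T by exact HP.
      replace (B0 / 2 ^ S n) with (B0 / 2 ^ n / 2) by (simpl; field; apply pow_nonzero; lra).
      apply picard_contraction; auto.
      + apply Rdiv_le_0_compat; [unfold B0; lra|apply pow_lt; lra].
      + intros; apply ex_RInt_G; intros; apply cont2_picard_iter.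
      + intros; apply ex_RInt_G; intros; apply cont2_picard_iter. }
  exists (B0 * weight 1). split; [pose proof (weight_ge_1 1 ltac:(lra)); unfold B0; nra|].
  intros n i z w. rewrite (picard_iter_proj (S n)), (picard_iter_proj n).
  eapply Rle_trans; [apply HT, proj_in|].
  replace (B0 * weight 1 / 2 ^ n) with (B0 / 2 ^ n * weight 1) by (field; apply pow_nonzero; lra).
  apply Rmult_le_compat_l; [apply Rdiv_le_0_compat; [unfold B0; lra|apply pow_lt; lra]|].
  apply weight_le_1. apply proj_w_in.
Qed.

Definition picard_limit (i : bool) (z w : R) : R := Lim_seq (fun n => picard_iter n i z w).

Lemma picard_limit_approx :
  exists A, 0 <= A /\ forall n i z w, Rabs (picard_limit i z w - picard_iter n i z w) <= 2 * A / 2 ^ n.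
Proof.
  destruct picard_iter_step_bound as [A [HA H]]. exists A; split; [exact HA|].
  intros n i z w. apply (Lim_seq_geom_bound (fun n => picard_iter n i z w)); [exact HA|]. intros; apply H.
Qed.

Lemma cont2_picard_limit i : cont2 (picard_limit i).
Proof.
  destruct picard_limit_approx as [A [HA H]].
  apply (cont2_unif_limit (fun n => picard_iter n i) _ (fun n => 2 * A / 2 ^ n)).
  - intros; apply cont2_picard_iter.
  - intros; apply H.
  - intros; apply pow2_small; assumption.
Qed.

Lemma picard_limit_fixed i z w : inT z w -> picard_limit i z w = picard picard_limit i z w.
Proof.
  intros HP. apply Rminus_diag_uniq. destruct picard_limit_approx as [A [HA Happ]].
  assert (Hp : forall n, 0 < 2 ^ n) by (intros; apply pow_lt; lra).
  apply (eq_0_of_pow2_bound _ (A + A * weight 1)). intros n.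
  assert (H1 := Happ (S n) i z w).
  change (picard_iter (S n) i z w) with (picard_ext (picard_iter n) i z w) in H1.
  rewrite picard_ext_T in H1 by exact HP.
  replace (2 * A / 2 ^ S n) with (A / 2 ^ n) in H1 by (simpl; field; apply pow_nonzero; lra).
  assert (H2 : Rabs (picard picard_limit i z w - picard (picard_iter n) i z w) <=
    (2 * A / 2 ^ n) / 2 * weight w).
  { apply picard_contraction; [apply Rdiv_le_0_compat; [lra|apply Hp]| | | |exact HP].
    - intros; apply ex_RInt_G; intros; apply cont2_picard_limit.
    - intros; apply ex_RInt_G; intros; apply cont2_picard_iter.
    - intros i' z' w' HP'. eapply Rle_trans; [apply Happ|].
      pose proof (weight_ge_1 w' ltac:(destruct HP'; lra)).
      assert (0 <= 2 * A / 2 ^ n) by (apply Rdiv_le_0_compat; [lra|apply Hp]). nra. }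
  assert (Hr : 2 * A / 2 ^ n / 2 * weight w <= A * weight 1 / 2 ^ n).
  { replace (2 * A / 2 ^ n / 2 * weight w) with (A * weight w / 2 ^ n) by (field; apply pow_nonzero; lra).
    unfold Rdiv. apply Rmult_le_compat_r; [left; apply Rinv_0_lt_compat, Hp|].
    apply Rmult_le_compat_l; [exact HA|]. apply weight_le_1. destruct HP; lra. }
  replace ((A + A * weight 1) / 2 ^ n) with (A / 2 ^ n + A * weight 1 / 2 ^ n)
    by (field; apply pow_nonzero; lra).
  split_Rabs; lra.
Qed.

Lemma picard_limit_boundary i w : 0 <= w <= 1 -> picard_limit i (- w) w = g i w.
Proof.
  intros Hw. rewrite picard_limit_fixed by (split; lra). unfold picard, flow_integral.
  rewrite hit_time_antidiag, flow_0 by exact Hw.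
  rewrite RInt_point. change (@zero R_CompleteNormedModule) with 0. ring.
Qed.

Lemma picard_limit_along_flow i z w t : inT z w -> inT (flow z t) (flow w t) ->
  picard_limit i (flow z t) (flow w t) - picard_limit i z w =
  RInt (fun r => G picard_limit i (flow z r) (flow w r)) 0 t.
Proof.
  intros HP0 HP1.
  set (H0 := fun r => G picard_limit i (flow z r) (flow w r)).
  assert (Ex : forall x y, ex_RInt H0 x y) by (intros; apply ex_RInt_G, cont2_picard_limit).
  rewrite (picard_limit_fixed i _ _ HP1), (picard_limit_fixed i _ _ HP0).
  unfold picard, flow_integral. rewrite (hit_time_flow z w t HP0 HP1).
  set (s := hit_time z w). rewrite flow_add. replace (t + (s - t)) with s by ring.
  assert (Hshift : is_RInt (fun r => G picard_limit i (flow (flow z t) r) (flow (flow w t) r))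
    (s - t) 0 (RInt H0 s t)).
  { assert (I1 : is_RInt H0 (1 * (s - t) + t) (1 * 0 + t) (RInt H0 s t)).
    { replace (1 * (s - t) + t) with s by ring. replace (1 * 0 + t) with t by ring.
      apply (RInt_correct (V := R_CompleteNormedModule)), Ex. }
    eapply is_RInt_ext; [|exact (is_RInt_comp_lin _ _ _ _ _ _ I1)].
    intros x _. cbv beta. change (scal ?u ?v) with (u * v). rewrite Rmult_1_l.
    unfold H0. rewrite !flow_add. f_equal; f_equal; ring. }
  rewrite (is_RInt_unique _ _ _ _ Hshift).
  rewrite <- (RInt_Chasles (V := R_CompleteNormedModule) H0 s 0 t) by apply Ex.
  change (plus ?u ?v) with (u + v). fold H0. ring.
Qed.

Lemma picard_limit_char i : char_solution_T a (picard_limit i) (G picard_limit i).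
Proof.
  intros s0 s1 zc wc [Hs [Hz [Hw Hin]]].
  assert (Fz := char_flow zc s0 s1 Hs Hz). assert (Fw := char_flow wc s0 s1 Hs Hw).
  assert (Hs0 : inI s0 s1 s0) by (unfold inI; lra). assert (Hs1 : inI s0 s1 s1) by (unfold inI; lra).
  assert (HP1 : inT (flow (zc s0) (s1 - s0)) (flow (wc s0) (s1 - s0)))
    by (rewrite <- (Fz s1 Hs1), <- (Fw s1 Hs1); apply Hin, Hs1).
  rewrite (Fz s1 Hs1), (Fw s1 Hs1), (picard_limit_along_flow _ _ _ _ (Hin s0 Hs0) HP1).
  assert (I : is_RInt (fun r => G picard_limit i (flow (zc s0) r) (flow (wc s0) r))
    (1 * s0 + - s0) (1 * s1 + - s0) (RInt (fun r => G picard_limit i (flow (zc s0) r) (flow (wc s0) r)) 0 (s1 - s0))).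
  { replace (1 * s0 + - s0) with 0 by ring. replace (1 * s1 + - s0) with (s1 - s0) by ring.
    apply (RInt_correct (V := R_CompleteNormedModule)), ex_RInt_G, cont2_picard_limit. }
  eapply is_RInt_ext; [|exact (is_RInt_comp_lin _ _ _ _ _ _ I)].
  intros x Hx. rewrite Rmin_left, Rmax_right in Hx by lra.
  cbv beta. change (scal ?u ?v) with (u * v). rewrite Rmult_1_l.
  rewrite (Fz x), (Fw x) by (unfold inI; lra). f_equal; f_equal; ring.
Qed.

(* Integrating a solution along the backward characteristic down to the line [z = -w] shows it is a fixed point of [picard]. *)
Lemma char_solution_fixed (V : bool -> R -> R -> R) :
  (forall i, char_solution_T a (V i) (G V i)) ->
  (forall i w, 0 <= w <= 1 -> V i (- w) w = g i w) ->
  forall i z w, inT z w ->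
    ex_RInt (fun s => G V i (flow z s) (flow w s)) (hit_time z w) 0 /\ V i z w = picard V i z w.
Proof.
  intros Hsol Hbd i z w HP.
  set (s := hit_time z w).
  destruct (hit_time_spec z w HP) as [[Hs1 Hs2] Hg0]. fold s in Hs1, Hs2, Hg0.
  assert (Hc : char_curve_T a s 0 (flow z) (flow w)).
  { split; [lra|]. split; [|split].
    - apply is_derive_has_deriv_on. intros; apply flow_derive.
    - apply is_derive_has_deriv_on. intros; apply flow_derive.
    - intros x Hx. apply flow_in_T; [exact HP|unfold inI in Hx; fold s; lra]. }
  specialize (Hsol i s 0 (flow z) (flow w) Hc).
  assert (HT := flow_in_T z w s HP ltac:(fold s; lra)).
  assert (Eh : flow z s = - flow w s) by (unfold flow_sum in Hg0; lra).
  rewrite Eh, Hbd, !flow_0 in Hsol by (destruct HT; lra).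
  split.
  - exists (V i z w - g i (flow w s)). exact Hsol.
  - unfold picard, flow_integral. fold s. rewrite (is_RInt_unique _ _ _ _ Hsol). ring.
Qed.

Lemma triangle_solution_unique (V1 V2 : bool -> R -> R -> R) :
  (forall i, cont_T (V1 i)) -> (forall i, char_solution_T a (V1 i) (G V1 i)) ->
  (forall i w, 0 <= w <= 1 -> V1 i (- w) w = g i w) ->
  (forall i, cont_T (V2 i)) -> (forall i, char_solution_T a (V2 i) (G V2 i)) ->
  (forall i w, 0 <= w <= 1 -> V2 i (- w) w = g i w) ->
  forall i z w, inT z w -> V1 i z w = V2 i z w.
Proof.
  intros C1 S1 B1 C2 S2 B2.
  destruct (cont_T_bounded _ (C1 true)) as [b1 [P1 Q1]].
  destruct (cont_T_bounded _ (C1 false)) as [b2 [P2 Q2]].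
  destruct (cont_T_bounded _ (C2 true)) as [b3 [P3 Q3]].
  destruct (cont_T_bounded _ (C2 false)) as [b4 [P4 Q4]].
  set (Bd := b1 + b2 + b3 + b4).
  assert (H0 : forall i z w, inT z w -> Rabs (V1 i z w - V2 i z w) <= Bd).
  { intros [|] z w HP; [specialize (Q1 z w HP); specialize (Q3 z w HP)
                       |specialize (Q2 z w HP); specialize (Q4 z w HP)];
      unfold Bd; split_Rabs; lra. }
  assert (Hn : forall n i z w, inT z w -> Rabs (V1 i z w - V2 i z w) <= Bd / 2 ^ n * weight w).
  { induction n as [|n IH]; intros i z w HP.
    - simpl. rewrite Rdiv_1_r. pose proof (weight_ge_1 w ltac:(destruct HP; lra)).
      specialize (H0 i z w HP). assert (0 <= Bd) by (unfold Bd; lra). nra.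
    - destruct (char_solution_fixed V1 S1 B1 i z w HP) as [_ ->].
      destruct (char_solution_fixed V2 S2 B2 i z w HP) as [_ ->].
      replace (Bd / 2 ^ S n) with (Bd / 2 ^ n / 2) by (simpl; field; apply pow_nonzero; lra).
      apply picard_contraction; [| | |exact IH|exact HP].
      + apply Rdiv_le_0_compat; [unfold Bd; lra|apply pow_lt; lra].
      + intros; apply (char_solution_fixed V1 S1 B1); assumption.
      + intros; apply (char_solution_fixed V2 S2 B2); assumption. }
  intros i z w HP. apply Rminus_diag_uniq. apply (eq_0_of_pow2_bound _ (Bd * weight 1)). intros n.
  eapply Rle_trans; [apply Hn, HP|].
  assert (Hp : 0 < 2 ^ n) by (apply pow_lt; lra).
  replace (Bd * weight 1 / 2 ^ n) with (Bd / 2 ^ n * weight 1) by (field; lra).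
  apply Rmult_le_compat_l; [apply Rdiv_le_0_compat; [unfold Bd; lra|exact Hp]|].
  apply weight_le_1. destruct HP; lra.
Qed.

End Picard.

End Flow.

Theorem triangle_solution_exists (a : R -> R) (m M : R) (Ha : continuity a) (Hm : 0 < m)
  (Hab : forall x, m <= a x <= M)
  (G : (bool -> R -> R -> R) -> bool -> R -> R -> R) (g : bool -> R -> R)
  (HG_cont : forall u, (forall i, cont2 (u i)) -> forall i, cont2 (G u i))
  (Hg_cont : forall i, continuity (g i)) (C : R) (HC : 0 <= C)
  (HG_lip : forall u v (rho : R -> R),
    (forall i z w, inT z w -> Rabs (u i z w - v i z w) <= rho w) ->
    forall i z w, inT z w -> Rabs (G u i z w - G v i z w) <= C * rho w) :
  exists U, (forall i, cont_T (U i)) /\ (forall i, char_solution_T a (U i) (G U i)) /\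
    (forall i w, 0 <= w <= 1 -> U i (- w) w = g i w).
Proof.
  exists (picard_limit a G g). split; [|split].
  - intros i. apply cont2_cont_T, (cont2_picard_limit a m M Ha Hm Hab G g HG_cont Hg_cont C HC HG_lip).
  - apply (picard_limit_char a m M Ha Hm Hab G g HG_cont Hg_cont C HC HG_lip).
  - apply (picard_limit_boundary a m M Ha Hm Hab G g HG_cont Hg_cont C HC HG_lip).
Qed.

(** * From T to E *)

Lemma inE_upper b z w : inE z w -> 0 <= w -> inT (refl b z) w.
Proof.
  intros [H1 [H2 H3]] Hw. rewrite (Rabs_right w) in H3 by lra.
  split; [lra|]. destruct b; simpl; split_Rabs; lra.
Qed.

Lemma inE_lower b z w : inE z w -> w <= 0 -> inT (refl b z) (- w).
Proof.
  intros [H1 [H2 H3]] Hw. rewrite (Rabs_left1 w) in H3 by lra.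
  split; [lra|]. destruct b; simpl; split_Rabs; lra.
Qed.

Lemma inT_inE bz bw z w : inT z w -> inE (refl bz z) (refl bw w).
Proof.
  intros [H1 H2]. split; [destruct bz; simpl; lra|split; [destruct bw; simpl; lra|]].
  destruct bz, bw; simpl; rewrite ?Rabs_Ropp, (Rabs_right w) by lra; apply Rabs_le; lra.
Qed.

Lemma cont_T_of_E f bz bw : cont_on_E f -> cont_T (fun z w => f (refl bz z) (refl bw w)).
Proof.
  intros Hf z w HP eps He.
  destruct (Hf _ _ (inT_inE bz bw z w HP) eps He) as [d [Hd H']]. exists d; split; [exact Hd|].
  intros z' w' HQ Hz Hw. apply H'; [apply inT_inE, HQ|rewrite Rabs_refl_sub; exact Hz|rewrite Rabs_refl_sub; exact Hw].
Qed.

Definition glue (F1 F2 : R -> R -> R) (b1 b2 : bool) (z w : R) : R :=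
  if Rle_dec 0 w then F1 (refl b1 z) w else F2 (refl b2 z) (- w).

Lemma glue_upper F1 F2 b1 b2 z w : 0 <= w -> glue F1 F2 b1 b2 z w = F1 (refl b1 z) w.
Proof. intros H. unfold glue. destruct Rle_dec; [reflexivity|lra]. Qed.

Lemma glue_lower F1 F2 b1 b2 z w : F1 0 0 = F2 0 0 -> inE z w -> w <= 0 ->
  glue F1 F2 b1 b2 z w = F2 (refl b2 z) (- w).
Proof.
  intros E0 HE H. unfold glue. destruct Rle_dec; [|reflexivity].
  assert (w = 0) by lra. subst w. rewrite (inE_0 z HE), Ropp_0.
  destruct b1, b2; simpl; rewrite ?Ropp_0; exact E0.
Qed.

Lemma cont_on_E_glue F1 F2 b1 b2 : cont_T F1 -> cont_T F2 -> F1 0 0 = F2 0 0 ->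
  cont_on_E (glue F1 F2 b1 b2).
Proof.
  intros C1 C2 E0 z w HP eps He.
  destruct (Rtotal_order w 0) as [Hw|[Hw|Hw]].
  - destruct (C2 _ _ (inE_lower b2 z w HP ltac:(lra)) eps He) as [d [Hd H']].
    exists (Rmin d (- w)); split; [apply Rmin_pos; lra|].
    intros z' w' HQ Hz Hw'. pose proof (Rmin_l d (- w)). pose proof (Rmin_r d (- w)).
    rewrite !(glue_lower F1 F2 b1 b2) by (assumption || split_Rabs; lra).
    apply H'; [apply inE_lower; [exact HQ|split_Rabs; lra]|rewrite Rabs_refl_sub; lra|split_Rabs; lra].
  - subst w. rewrite (inE_0 z HP) in *. assert (HT0 : inT 0 0) by (split; lra).
    destruct (C1 _ _ HT0 eps He) as [d1 [Hd1 H1]]. destruct (C2 _ _ HT0 eps He) as [d2 [Hd2 H2]].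
    exists (Rmin d1 d2); split; [apply Rmin_pos; assumption|].
    intros z' w' HQ Hz Hw'. pose proof (Rmin_l d1 d2). pose proof (Rmin_r d1 d2).
    rewrite Rminus_0_r in Hz, Hw'.
    rewrite (glue_upper F1 F2 b1 b2 0 0) by lra. replace (refl b1 0) with 0 by (destruct b1; simpl; ring).
    destruct (Rle_dec 0 w') as [Hp|Hn].
    + rewrite glue_upper by exact Hp. apply H1; [apply inE_upper; assumption| |rewrite Rminus_0_r; lra].
      rewrite Rminus_0_r. destruct b1; simpl; rewrite ?Rabs_Ropp; lra.
    + rewrite (glue_lower F1 F2 b1 b2) by (assumption || lra). rewrite E0.
      apply H2; [apply inE_lower; [exact HQ|lra]| |rewrite Rminus_0_r, Rabs_Ropp; lra].
      rewrite Rminus_0_r. destruct b2; simpl; rewrite ?Rabs_Ropp; lra.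
  - destruct (C1 _ _ (inE_upper b1 z w HP ltac:(lra)) eps He) as [d [Hd H']].
    exists (Rmin d w); split; [apply Rmin_pos; lra|].
    intros z' w' HQ Hz Hw'. pose proof (Rmin_l d w). pose proof (Rmin_r d w).
    rewrite !glue_upper by (split_Rabs; lra).
    apply H'; [apply inE_upper; [exact HQ|split_Rabs; lra]|rewrite Rabs_refl_sub; lra|lra].
Qed.

Lemma inE_half h b z w : inE z w -> 0 <= refl h w -> inT (refl b z) (refl h w).
Proof. destruct h; simpl; intros HE Hw; [apply inE_lower|apply inE_upper]; auto; lra. Qed.

Definition extend (h : bool) (f : R -> R) (x : R) : R := f (clamp (-1) 1 (refl h x)).

Lemma extend_id h f x : -1 <= x <= 1 -> extend h f x = f (refl h x).
Proof. intros H. unfold extend. rewrite clamp_id; [reflexivity|destruct h; simpl; lra]. Qed.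

Lemma continuity_extend h f : cont_on (-1) 1 f -> continuity (extend h f).
Proof.
  intros H. assert (Hc := continuity_clamp (-1) 1 f ltac:(lra) H). destruct h; [|exact Hc].
  apply (continuity_comp (fun x => - x) (fun y => f (clamp (-1) 1 y))); [|exact Hc].
  apply continuity_opp, derivable_continuous, derivable_id.
Qed.

Lemma extend_bounds h f : cont_on (-1) 1 f ->
  exists x0 x1, -1 <= x0 <= 1 /\ -1 <= x1 <= 1 /\ forall x, f x0 <= extend h f x <= f x1.
Proof.
  intros H. set (g y := f (clamp (-1) 1 y)).
  assert (Hg : forall y, -1 <= y <= 1 -> continuity_pt g y)
    by (intros; apply (continuity_clamp (-1) 1 f ltac:(lra) H)).
  destruct (continuity_ab_min g (-1) 1 ltac:(lra) Hg) as [x0 [H0 Hx0]].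
  destruct (continuity_ab_maj g (-1) 1 ltac:(lra) Hg) as [x1 [H1 Hx1]].
  exists x0, x1. split; [exact Hx0|split; [exact Hx1|]]. intros x.
  assert (Hin : -1 <= clamp (-1) 1 (refl h x) <= 1) by (apply clamp_in; lra).
  specialize (H0 _ Hin). specialize (H1 _ Hin). unfold g in *.
  rewrite (clamp_id (-1) 1 x0 Hx0), (clamp_id (-1) 1 _ Hin) in H0.
  rewrite (clamp_id (-1) 1 x1 Hx1), (clamp_id (-1) 1 _ Hin) in H1.
  unfold extend. split; assumption.
Qed.

Lemma extend_bounded h f : cont_on (-1) 1 f -> exists B, 0 <= B /\ forall x, Rabs (extend h f x) <= B.
Proof.
  intros H. destruct (extend_bounds h f H) as [x0 [x1 [_ [_ Hb]]]].
  exists (Rabs (f x0) + Rabs (f x1)). split; [pose proof (Rabs_pos (f x0)); pose proof (Rabs_pos (f x1)); lra|].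
  intros x. specialize (Hb x). split_Rabs; lra.
Qed.

Lemma extend_pos_bounds h f : cont_on (-1) 1 f -> (forall x, inI (-1) 1 x -> 0 < f x) ->
  exists m M, 0 < m /\ forall x, m <= extend h f x <= M.
Proof.
  intros H Hp. destruct (extend_bounds h f H) as [x0 [x1 [Hx0 [_ Hb]]]].
  exists (f x0), (f x1). split; [apply Hp, Hx0|exact Hb].
Qed.

Lemma Rabs_lin_comb_le p q x y P Q r : Rabs p <= P -> Rabs q <= Q -> Rabs x <= r -> Rabs y <= r ->
  Rabs (p * x + q * y) <= (P + Q) * r.
Proof.
  intros. eapply Rle_trans; [apply Rabs_triang|]. rewrite !Rabs_mult.
  assert (Rabs p * Rabs x <= P * r) by (apply Rmult_le_compat; auto; apply Rabs_pos).
  assert (Rabs q * Rabs y <= Q * r) by (apply Rmult_le_compat; auto; apply Rabs_pos). lra.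
Qed.

Section System.

Variables lam dlam mu dmu b c : R -> R.
Hypothesis Hlam : C1_on (-1) 1 lam dlam.
Hypothesis Hmu : C1_on (-1) 1 mu dmu.
Hypothesis Hlam_pos : forall x, inI (-1) 1 x -> 0 < lam x.
Hypothesis Hmu_pos : forall x, inI (-1) 1 x -> 0 < mu x.
Hypothesis Hsym : forall w, inI (-1) 1 w -> lam w = mu (- w).
Hypothesis Hb : cont_on (-1) 1 b.
Hypothesis Hc : cont_on (-1) 1 c.

(* The pair of unknowns [(L11, L12)] is packed as [Lp : bool -> R -> R -> R]. *)
Definition speed_E (i : bool) (x : R) : R := if i then lam x else - mu x.

Definition rhs_E (Lp : bool -> R -> R -> R) (i : bool) (z w : R) : R :=
  if i then - dlam z * Lp true z w - c z * Lp false z w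
  else - b z * Lp true z w + dmu z * Lp false z w.

Definition is_solution_E (Lp : bool -> R -> R -> R) : Prop :=
  (forall i, cont_on_E (Lp i)) /\
  (forall i, char_solution (speed_E i) lam (Lp i) (rhs_E Lp i)) /\
  (forall w, inI (-1) 1 w -> Lp true (- w) w = 0) /\
  (forall w, inI (-1) 1 w -> Lp false w w = b w / (lam w + mu w)).

(* The half [0 <= refl h w] of E is mapped onto T by [w |-> refl h w] and [z |-> refl (zsign h i) z];
   by [Hsym] both equations then take the form [a(w) u_w + a(z) u_z = ...] with [a = speed_T h],
   after reversing the time of the characteristics on the lower half. *)
Definition zsign (h i : bool) : bool := if i then h else negb h.

Definition to_T (Lp : bool -> R -> R -> R) (h i : bool) (z w : R) : R :=
  Lp i (refl (zsign h i) z) (refl h w).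

Definition speed_T (h : bool) : R -> R := extend h lam.

Definition rhs_T (h : bool) (u : bool -> R -> R -> R) (i : bool) (z w : R) : R :=
  refl h (if i then - extend h dlam z * u true z w - extend h c z * u false (- z) w
          else - extend h b (- z) * u true (- z) w + extend h dmu (- z) * u false z w).

Definition bdry_T (h i : bool) (w : R) : R :=
  if i then 0 else extend h b w / (extend h lam w + extend h mu w).

Lemma cont_on_lam : cont_on (-1) 1 lam.
Proof. apply (has_deriv_on_cont_on _ _ _ dlam), Hlam. Qed.

Lemma cont_on_mu : cont_on (-1) 1 mu.
Proof. apply (has_deriv_on_cont_on _ _ _ dmu), Hmu. Qed.

Lemma rhs_T_to_E h Lp i z w : -1 <= z <= 1 ->
  rhs_T h (to_T Lp h) i z w = refl h (rhs_E Lp i (refl (zsign h i) z) (refl h w)).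
Proof.
  intros Hz. unfold rhs_T, to_T, rhs_E. rewrite !extend_id by lra.
  destruct h, i; simpl; rewrite ?Ropp_involutive; ring.
Qed.

Lemma speed_E_T h i x : -1 <= x <= 1 ->
  speed_E i x = refl (xorb h (zsign h i)) (speed_T h (refl (zsign h i) x)).
Proof.
  intros Hx. unfold speed_T. rewrite extend_id by (destruct h, i; simpl; lra).
  assert (Hs : lam (- x) = mu x) by (rewrite Hsym, Ropp_involutive by (unfold inI; lra); reflexivity).
  destruct h, i; simpl; rewrite ?Ropp_involutive, ?Hs; reflexivity.
Qed.

Lemma speed_w_T h x : -1 <= x <= 1 -> lam x = refl (xorb h h) (speed_T h (refl h x)).
Proof.
  intros Hx. unfold speed_T. rewrite extend_id by (destruct h; simpl; lra).
  rewrite refl_involutive. destruct h; reflexivity.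
Qed.

Lemma speed_T_bounds h : exists m M, 0 < m /\ forall x, m <= speed_T h x <= M.
Proof. apply extend_pos_bounds; [apply cont_on_lam|exact Hlam_pos]. Qed.

Lemma continuity_speed_T h : continuity (speed_T h).
Proof. apply continuity_extend, cont_on_lam. Qed.

Lemma continuity_extend_opp h f : cont_on (-1) 1 f -> continuity (fun x => extend h f (- x)).
Proof.
  intros H. apply (continuity_comp (fun x => - x) (extend h f)); [|apply continuity_extend, H].
  apply continuity_opp, derivable_continuous, derivable_id.
Qed.

Lemma cont2_rhs_T h u : (forall i, cont2 (u i)) -> forall i, cont2 (rhs_T h u i).
Proof.
  intros Hu i.
  assert (Hcoef : forall f, cont_on (-1) 1 f -> continuity (fun x => - extend h f x))
    by (intros f Hf; apply continuity_opp, continuity_extend, Hf).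
  assert (Hin : cont2 (fun z w => if i then - extend h dlam z * u true z w - extend h c z * u false (- z) w
          else - extend h b (- z) * u true (- z) w + extend h dmu (- z) * u false z w)).
  { destruct i; intros z w.
    - apply continuity_2d_pt_minus.
      + apply (cont2_mult_l (fun x => - extend h dlam x)); [apply Hcoef, Hlam|apply Hu].
      + apply cont2_mult_l; [apply continuity_extend, Hc|apply cont2_opp_l, Hu].
    - apply continuity_2d_pt_plus.
      + apply (cont2_opp_l (fun z w => - extend h b z * u true z w)).
        apply cont2_mult_l; [apply Hcoef, Hb|apply Hu].
      + apply (cont2_mult_l (fun x => extend h dmu (- x))); [apply continuity_extend_opp, Hmu|apply Hu]. }
  destruct h; [intros z w; apply continuity_2d_pt_opp|]; apply Hin.
Qed.

Lemma rhs_T_lip h : exists C, 0 <= C /\ forall u v (rho : R -> R),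
  (forall i z w, inT z w -> Rabs (u i z w - v i z w) <= rho w) ->
  forall i z w, inT z w -> Rabs (rhs_T h u i z w - rhs_T h v i z w) <= C * rho w.
Proof.
  destruct (extend_bounded h dlam (proj2 Hlam)) as [B1 [P1 Q1]].
  destruct (extend_bounded h c Hc) as [B2 [P2 Q2]].
  destruct (extend_bounded h b Hb) as [B3 [P3 Q3]].
  destruct (extend_bounded h dmu (proj2 Hmu)) as [B4 [P4 Q4]].
  exists (B1 + B2 + B3 + B4). split; [lra|]. intros u v rho H i z w HP.
  assert (HPn : inT (- z) w) by (destruct HP; split; lra).
  assert (0 <= rho w) by (pose proof (Rabs_pos (u true z w - v true z w)); pose proof (H true z w HP); lra).
  unfold rhs_T. rewrite Rabs_refl_sub. destruct i.
  - replace (- extend h dlam z * u true z w - extend h c z * u false (- z) w -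
      (- extend h dlam z * v true z w - extend h c z * v false (- z) w)) with
      (- extend h dlam z * (u true z w - v true z w) + - extend h c z * (u false (- z) w - v false (- z) w))
      by ring.
    eapply Rle_trans; [apply Rabs_lin_comb_le; [rewrite Rabs_Ropp; apply Q1|rewrite Rabs_Ropp; apply Q2|apply H, HP|apply H, HPn]|].
    nra.
  - replace (- extend h b (- z) * u true (- z) w + extend h dmu (- z) * u false z w -
      (- extend h b (- z) * v true (- z) w + extend h dmu (- z) * v false z w)) with
      (- extend h b (- z) * (u true (- z) w - v true (- z) w) + extend h dmu (- z) * (u false z w - v false z w))
      by ring.
    eapply Rle_trans; [apply Rabs_lin_comb_le; [rewrite Rabs_Ropp; apply Q3|apply Q4|apply H, HPn|apply H, HP]|].
    nra.
Qed.

Lemma continuity_bdry_T h i : continuity (bdry_T h i).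
Proof.
  destruct i; [apply continuity_const; intros ? ?; reflexivity|].
  apply continuity_div; [apply continuity_extend, Hb|apply continuity_plus; apply continuity_extend;
    [apply cont_on_lam|apply cont_on_mu]|].
  intros x. unfold extend. assert (-1 <= clamp (-1) 1 (refl h x) <= 1) by (apply clamp_in; lra).
  pose proof (Hlam_pos _ H). pose proof (Hmu_pos _ H). lra.
Qed.

Lemma to_T_bdry Lp h i w : is_solution_E Lp -> 0 <= w <= 1 -> to_T Lp h i (- w) w = bdry_T h i w.
Proof.
  intros [_ [_ [HL HK]]] Hw. unfold to_T, bdry_T. rewrite !extend_id by (destruct h; simpl; lra).
  destruct h, i; simpl; rewrite ?Ropp_involutive.
  - replace w with (- - w) at 1 by ring. apply HL. unfold inI; lra.
  - apply HK. unfold inI; lra.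
  - apply HL. unfold inI; lra.
  - apply HK. unfold inI; lra.
Qed.

Lemma rhs_T_ext_T h (u v : bool -> R -> R -> R) : (forall i z w, inT z w -> u i z w = v i z w) ->
  forall i z w, inT z w -> rhs_T h u i z w = rhs_T h v i z w.
Proof.
  intros H i z w HP. assert (HPn : inT (- z) w) by (destruct HP; split; lra).
  unfold rhs_T. rewrite !H by assumption. reflexivity.
Qed.

Lemma char_solution_T_of_E Lp h : (forall i, char_solution (speed_E i) lam (Lp i) (rhs_E Lp i)) ->
  forall i, char_solution_T (speed_T h) (to_T Lp h i) (rhs_T h (to_T Lp h) i).
Proof.
  intros Hsol i t0 t1 Z W [Ht [HZ [HW Hin]]].
  assert (Bz : forall t, inI t0 t1 t -> -1 <= Z t <= 1) by (intros t Ht'; destruct (Hin t Ht'); lra).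
  assert (Bw : forall t, inI t0 t1 t -> -1 <= W t <= 1) by (intros t Ht'; destruct (Hin t Ht'); lra).
  assert (Hcurve : char_curve (speed_E i) lam (rev_lo h t0 t1) (rev_hi h t0 t1)
      (fun s => refl (zsign h i) (Z (refl h s))) (fun s => refl h (W (refl h s)))).
  { refine (conj (rev_bounds h t0 t1 Ht) (conj _ (conj _ _))).
    - apply (char_transform h _ t0 t1 Z (speed_T h)); [exact Bz| |exact HZ].
      apply refl_cond_sym. intros; apply speed_E_T; assumption.
    - apply (char_transform h h t0 t1 W (speed_T h)); [exact Bw| |exact HW].
      apply refl_cond_sym. intros; apply speed_w_T; assumption.
    - intros s Hs. apply inT_inE, Hin, rev_in, Hs. }
  assert (HR := is_RInt_refl h _ t0 t1 _ (Hsol i _ _ _ _ Hcurve)). cbv beta in HR.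
  pose proof (refl_rev_value h (fun t => to_T Lp h i (Z t) (W t)) t0 t1) as HV.
  unfold to_T in HV. cbv beta in HV. rewrite HV in HR.
  eapply is_RInt_ext; [|exact HR]. intros x Hx. rewrite Rmin_left, Rmax_right in Hx by lra.
  cbv beta. rewrite !refl_involutive, rhs_T_to_E by (apply Bz; unfold inI; lra). reflexivity.
Qed.

Lemma char_E_of_T Lp h (V : bool -> R -> R -> R) :
  (forall i z w, inT z w -> V i z w = to_T Lp h i z w) ->
  (forall i, char_solution_T (speed_T h) (V i) (rhs_T h V i)) ->
  forall i s0 s1 zc wc, char_curve (speed_E i) lam s0 s1 zc wc ->
  (forall s, inI s0 s1 s -> 0 <= refl h (wc s)) ->
  is_RInt (fun s => rhs_E Lp i (zc s) (wc s)) s0 s1 (Lp i (zc s1) (wc s1) - Lp i (zc s0) (wc s0)).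
Proof.
  intros HV Hsol i s0 s1 zc wc [Hs [Hz [Hw Hin]]] Hhalf.
  assert (Bz : forall s, inI s0 s1 s -> -1 <= zc s <= 1) by (intros s Hs'; apply (inE_bounds _ _ (Hin s Hs'))).
  assert (Bw : forall s, inI s0 s1 s -> -1 <= wc s <= 1) by (intros s Hs'; apply (inE_bounds _ _ (Hin s Hs'))).
  assert (HinT : forall t, inI (rev_lo h s0 s1) (rev_hi h s0 s1) t ->
    inT (refl (zsign h i) (zc (refl h t))) (refl h (wc (refl h t))))
    by (intros t Ht; apply inE_half; [apply Hin|apply Hhalf]; apply rev_in, Ht).
  assert (Hcurve : char_curve_T (speed_T h) (rev_lo h s0 s1) (rev_hi h s0 s1)
      (fun t => refl (zsign h i) (zc (refl h t))) (fun t => refl h (wc (refl h t)))).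
  { refine (conj (rev_bounds h s0 s1 Hs) (conj _ (conj _ HinT))).
    - apply (char_transform h _ s0 s1 zc (speed_E i)); [exact Bz| |exact Hz].
      intros; apply speed_E_T; assumption.
    - apply (char_transform h h s0 s1 wc lam); [exact Bw| |exact Hw].
      intros; apply speed_w_T; assumption. }
  assert (HR := is_RInt_refl h _ s0 s1 _ (Hsol i _ _ _ _ Hcurve)). cbv beta in HR.
  assert (Hlo := HinT _ (conj (Rle_refl _) (rev_bounds h s0 s1 Hs))).
  assert (Hhi := HinT _ (conj (rev_bounds h s0 s1 Hs) (Rle_refl _))).
  rewrite (HV i _ _ Hlo), (HV i _ _ Hhi) in HR. unfold to_T in HR. rewrite !refl_involutive in HR.
  rewrite (refl_rev_value h (fun t => Lp i (zc t) (wc t))) in HR.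
  eapply is_RInt_ext; [|exact HR]. intros x Hx. rewrite Rmin_left, Rmax_right in Hx by lra.
  cbv beta.
  assert (Hx' : inI (rev_lo h s0 s1) (rev_hi h s0 s1) (refl h x))
    by (destruct h; unfold inI in *; simpl; lra).
  pose proof (HinT _ Hx') as HxT. rewrite refl_involutive in HxT. rewrite !refl_involutive.
  rewrite (rhs_T_ext_T h V (to_T Lp h) HV i _ _ HxT).
  rewrite rhs_T_to_E by (destruct (zsign h i); simpl; pose proof (Bz x ltac:(unfold inI; lra)); lra).
  rewrite !refl_involutive. reflexivity.
Qed.

Lemma is_solution_E_unique Lp Lp' : is_solution_E Lp -> is_solution_E Lp' ->
  forall i z w, inE z w -> Lp i z w = Lp' i z w.
Proof.
  intros HL HL' i z w HE.
  assert (Hh : exists h, 0 <= refl h w) by (destruct (Rle_dec 0 w); [exists false|exists true]; simpl; lra).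
  destruct Hh as [h Hh].
  destruct (speed_T_bounds h) as [m [M [Hm Hmm]]]. destruct (rhs_T_lip h) as [C [HC HG]].
  assert (Hsol : forall Lp, is_solution_E Lp -> (forall i, cont_T (to_T Lp h i)) /\
    (forall i, char_solution_T (speed_T h) (to_T Lp h i) (rhs_T h (to_T Lp h) i)) /\
    (forall i w, 0 <= w <= 1 -> to_T Lp h i (- w) w = bdry_T h i w)).
  { intros L0 HL0. split; [|split].
    - intros j. apply cont_T_of_E, HL0.
    - apply char_solution_T_of_E, HL0.
    - intros j w0 Hw0. apply to_T_bdry; assumption. }
  destruct (Hsol Lp HL) as [C1 [S1 B1]]. destruct (Hsol Lp' HL') as [C2 [S2 B2]].
  assert (E := triangle_solution_unique _ m M (continuity_speed_T h) Hm Hmm _ _ C HC HG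
    _ _ C1 S1 B1 C2 S2 B2 i _ _ (inE_half h (zsign h i) z w HE Hh)).
  unfold to_T in E. rewrite !refl_involutive in E. exact E.
Qed.

Lemma is_solution_E_exists : exists Lp, is_solution_E Lp.
Proof.
  assert (HU : forall h, exists U, (forall i, cont_T (U i)) /\
    (forall i, char_solution_T (speed_T h) (U i) (rhs_T h U i)) /\
    (forall i w, 0 <= w <= 1 -> U i (- w) w = bdry_T h i w)).
  { intros h. destruct (speed_T_bounds h) as [m [M [Hm Hmm]]]. destruct (rhs_T_lip h) as [C [HC HG]].
    exact (triangle_solution_exists _ m M (continuity_speed_T h) Hm Hmm _ _
      (cont2_rhs_T h) (continuity_bdry_T h) C HC HG). }
  destruct (HU false) as [U0 [C0 [S0 B0]]]. destruct (HU true) as [U1 [C1 [S1 B1]]].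
  assert (H00 : forall i, U0 i 0 0 = U1 i 0 0).
  { intros i. pose proof (B0 i 0 ltac:(lra)) as E0. pose proof (B1 i 0 ltac:(lra)) as E1.
    rewrite Ropp_0 in E0, E1. rewrite E0, E1. unfold bdry_T, extend. destruct i; simpl; rewrite ?Ropp_0; reflexivity. }
  set (Lp i := glue (U0 i) (U1 i) (zsign false i) (zsign true i)).
  assert (HT0 : forall i z w, inT z w -> U0 i z w = to_T Lp false i z w).
  { intros i z w HP. unfold to_T, Lp. rewrite glue_upper by (destruct HP; simpl; lra).
    rewrite refl_involutive. reflexivity. }
  assert (HT1 : forall i z w, inT z w -> U1 i z w = to_T Lp true i z w).
  { intros i z w HP. unfold to_T, Lp.
    rewrite glue_lower; [|apply H00|apply inT_inE, HP|destruct HP; simpl; lra].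
    simpl. rewrite refl_involutive, Ropp_involutive. reflexivity. }
  exists Lp. refine (conj _ (conj _ (conj _ _))).
  - intros i. apply cont_on_E_glue; [apply C0|apply C1|apply H00].
  - intros i. destruct (speed_T_bounds false) as [m [M [Hm Hmm]]].
    apply (char_solution_of_halves (speed_T false) m M (continuity_speed_T false) Hm Hmm).
    + intros x Hx. unfold speed_T. rewrite extend_id by exact Hx. reflexivity.
    + intros s0 s1 zc wc Hcurve Hpos. exact (char_E_of_T Lp false U0 HT0 S0 i s0 s1 zc wc Hcurve Hpos).
    + intros s0 s1 zc wc Hcurve Hneg. apply (char_E_of_T Lp true U1 HT1 S1 i s0 s1 zc wc Hcurve).
      intros s Hs. specialize (Hneg s Hs). simpl. lra.
  - intros w Hw. unfold inI in Hw. unfold Lp, glue. destruct (Rle_dec 0 w); simpl.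
    + rewrite B0 by lra. reflexivity.
    + rewrite B1 by lra. reflexivity.
  - intros w Hw. unfold inI in Hw. unfold Lp, glue. destruct (Rle_dec 0 w); simpl.
    + rewrite B0 by lra. unfold bdry_T. rewrite !extend_id by lra. reflexivity.
    + rewrite <- (Ropp_involutive w) at 1. rewrite B1 by lra.
      unfold bdry_T. rewrite !extend_id by lra. simpl. rewrite Ropp_involutive. reflexivity.
Qed.

End System.

Definition pack (L K : R -> R -> R) (i : bool) : R -> R -> R := if i then L else K.

Lemma is_solution_E_pack lam dlam mu dmu b c Lp : is_solution_E lam dlam mu dmu b c Lp ->
  is_solution_E lam dlam mu dmu b c (pack (Lp true) (Lp false)).
Proof. intros [C [S B]]. split; [intros [|]; apply C|split; [intros [|]; apply S|exact B]]. Qed.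

Lemma char_solution_ext az aw L F F' : (forall z w, F z w = F' z w) ->
  char_solution az aw L F -> char_solution az aw L F'.
Proof. intros E H s0 s1 zc wc Hc. eapply is_RInt_ext; [|exact (H s0 s1 zc wc Hc)]. intros; apply E. Qed.

Lemma cont_on_opp a b f : cont_on a b f -> cont_on a b (fun z => - f z).
Proof.
  intros H x Hx eps He. destruct (H x Hx eps He) as [d [Hd H']]. exists d; split; [exact Hd|].
  intros y Hy Hxy. replace (- f y - - f x) with (- (f y - f x)) by ring. rewrite Rabs_Ropp. auto.
Qed.

(* The four equations split into the [(L11, L12)] system and, after exchanging [lam] and [mu] and
   replacing [(b, c)] by [(-c, -b)], the [(L22, L21)] system. *)
Lemma is_solution_iff lam dlam mu dmu b c L11 L12 L21 L22 :
  (forall w, inI (-1) 1 w -> lam w + mu w <> 0) ->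
  is_solution lam dlam mu dmu b c L11 L12 L21 L22 <->
  is_solution_E lam dlam mu dmu b c (pack L11 L12) /\
  is_solution_E mu dmu lam dlam (fun z => - c z) (fun z => - b z) (pack L22 L21).
Proof.
  intros Hden. split.
  - intros [C11 [C12 [C21 [C22 [S11 [S12 [S22 [S21 [B11 [B12 [B22 B21]]]]]]]]]]].
    split; (split; [intros [|]; assumption|split; [intros [|]|split; [assumption|]]]);
      try assumption.
    + eapply char_solution_ext; [|exact S22]. intros; simpl; ring.
    + eapply char_solution_ext; [|exact S21]. intros; simpl; ring.
    + intros w Hw. rewrite B21 by exact Hw. specialize (Hden w Hw). simpl. field. lra.
  - intros [[C1 [S1 [B11 B12]]] [C2 [S2 [B22 B21]]]].
    refine (conj (C1 true) (conj (C1 false) (conj (C2 false) (conj (C2 true)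
      (conj (S1 true) (conj (S1 false) (conj _ (conj _ (conj B11 (conj B12 (conj B22 _))))))))))).
    + eapply char_solution_ext; [|exact (S2 true)]. intros; simpl; ring.
    + eapply char_solution_ext; [|exact (S2 false)]. intros; simpl; ring.
    + intros w Hw. simpl in B21. rewrite B21 by exact Hw. specialize (Hden w Hw). field. lra.
Qed.

Theorem theorem1 (lam dlam mu dmu b c : R -> R)
  (Hlam : C1_on (-1) 1 lam dlam) (Hmu : C1_on (-1) 1 mu dmu)
  (Hlam_pos : forall x, inI (-1) 1 x -> 0 < lam x)
  (Hmu_pos : forall x, inI (-1) 1 x -> 0 < mu x)
  (Hsym : forall w, inI (-1) 1 w -> lam w = mu (- w))
  (Hb : cont_on (-1) 1 b) (Hc : cont_on (-1) 1 c) :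
  (exists L11 L12 L21 L22 : R -> R -> R,
      is_solution lam dlam mu dmu b c L11 L12 L21 L22) /\
  (forall L11 L12 L21 L22 M11 M12 M21 M22 : R -> R -> R,
      is_solution lam dlam mu dmu b c L11 L12 L21 L22 ->
      is_solution lam dlam mu dmu b c M11 M12 M21 M22 ->
      forall z w, inE z w ->
        L11 z w = M11 z w /\ L12 z w = M12 z w /\
        L21 z w = M21 z w /\ L22 z w = M22 z w).
Proof.
  assert (Hsym' : forall w, inI (-1) 1 w -> mu w = lam (- w)).
  { intros w Hw. rewrite Hsym, Ropp_involutive by (unfold inI in *; lra). reflexivity. }
  assert (Hden : forall w, inI (-1) 1 w -> lam w + mu w <> 0).
  { intros w Hw. pose proof (Hlam_pos w Hw). pose proof (Hmu_pos w Hw). lra. }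
  split.
  - destruct (is_solution_E_exists lam dlam mu dmu b c Hlam Hmu Hlam_pos Hmu_pos Hsym Hb Hc) as [Lp HL].
    destruct (is_solution_E_exists mu dmu lam dlam (fun z => - c z) (fun z => - b z) Hmu Hlam
      Hmu_pos Hlam_pos Hsym' (cont_on_opp _ _ c Hc) (cont_on_opp _ _ b Hb)) as [Kp HK].
    exists (Lp true), (Lp false), (Kp false), (Kp true).
    apply is_solution_iff; [exact Hden|]. split; apply is_solution_E_pack; assumption.
  - intros L11 L12 L21 L22 M11 M12 M21 M22 HL HM z w HE.
    apply is_solution_iff in HL, HM; try exact Hden. destruct HL as [HL1 HL2], HM as [HM1 HM2].
    pose proof (is_solution_E_unique _ _ _ _ _ _ Hlam Hmu Hlam_pos Hsym Hb Hc _ _ HL1 HM1) as U1.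
    pose proof (is_solution_E_unique _ _ _ _ _ _ Hmu Hlam Hmu_pos Hsym' (cont_on_opp _ _ c Hc)
      (cont_on_opp _ _ b Hb) _ _ HL2 HM2) as U2.
    exact (conj (U1 true z w HE) (conj (U1 false z w HE) (conj (U2 false z w HE) (U2 true z w HE)))).
Qed.
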